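(* Let $n=2$, $c\equiv1$ and $u_0(x)=-|x|$. For $\varepsilon>0$ let $u^\varepsilon$ be the unique viscosity solution of $$u^\varepsilon_t-\varepsilon\,\mathrm{tr}\{(I_2-\widehat{Du^\varepsilon}\otimes\widehat{Du^\varepsilon})D^2u^\varepsilon\}-|Du^\varepsilon|=0\ \text{in }\mathbb{R}^2\times(0,\infty),\qquad u^\varepsilon(\cdot,0)=u_0,$$ (i.e. $u^\varepsilon_t+F(\varepsilon D^2u^\varepsilon,Du^\varepsilon,x/\varepsilon)=0$ with $F(X,p,y)=-\mathrm{tr}\{(I_2-\hat p\otimes\hat p)X\}-c(y)|p|$), and let $u$ be the unique viscosity solution of the effective problem $u_t+\overline{F}(Du/|Du|)|Du|=0$ in $\mathbb{R}^2\times(0,\infty)$, $u(\cdot,0)=u_0$. Then for any $\varepsilon>0$ and any $(x,t)\in\mathbb{R}^2\times[0,\infty)$ with $|x|=t>\varepsilon(1+e^{-1})$, $$|u^\varepsilon(x,t)-u(x,t)|\geq\frac12\varepsilon\Big(\log\Big(\frac{t}{\varepsilon}-1\Big)+1\Big).$$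
   Context: $\hat p=p/|p|$ for $p\neq0$. For each $p\in\mathbb{R}^2$, $\overline{F}(p)$ denotes the unique real number such that $F(D^2v,p+Dv,y)=\overline{F}(p)$ admits a $\mathbb{Z}^2$-periodic viscosity solution (for $c\equiv1$ this gives $\overline{F}(p)=-|p|$). Solutions are viscosity solutions in the sense appropriate for geometric equations. *)

From Stdlib Require Import Reals.
Open Scope R_scope.

Definition pt := (R * R)%type.
Definition dot (p q : pt) : R := fst p * fst q + snd p * snd q.
Definition nrm (p : pt) : R := sqrt (dot p p).
Definition psub (p q : pt) : pt := (fst p - fst q, snd p - snd q).
Definition pscale (k : R) (p : pt) : pt := (k * fst p, k * snd p).

(* symmetric 2x2 matrices [[s11, s12], [s12, s22]] *)
Record sym2 := Sym2 { s11 : R; s12 : R; s22 : R }.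
Definition mxv (X : sym2) (v : pt) : pt :=
  (s11 X * fst v + s12 X * snd v, s12 X * fst v + s22 X * snd v).
(* tr(A X) for symmetric A, X *)
Definition trprod (A X : sym2) : R :=
  s11 A * s11 X + 2 * s12 A * s12 X + s22 A * s22 X.
Definition sym_dist (X Y : sym2) : R :=
  Rabs (s11 X - s11 Y) + Rabs (s12 X - s12 Y) + Rabs (s22 X - s22 Y).
Definition sscale (k : R) (X : sym2) : sym2 :=
  Sym2 (k * s11 X) (k * s12 X) (k * s22 X).

(* \hat p = p / |p| (only used for p <> 0) *)
Definition hat (p : pt) : pt := pscale (/ nrm p) p.
(* I_2 - \hat p (x) \hat p *)
Definition projm (p : pt) : sym2 :=
  let q := hat p in
  Sym2 (1 - fst q * fst q) (- (fst q * snd q)) (1 - snd q * snd q).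

Definition c (y : pt) : R := 1.
Definition F (X : sym2) (p : pt) (y : pt) : R :=
  - trprod (projm p) X - c y * nrm p.

(* Operator of the eps-problem: u_t + F(eps D^2u, Du, x/eps) = 0 *)
Definition Geps (eps : R) (x : pt) (X : sym2) (p : pt) : R :=
  F (sscale eps X) p (pscale (/ eps) x).

(* Effective Hamiltonian; for c == 1 the context gives Fbar(p) = -|p| *)
Definition Fbar (p : pt) : R := - nrm p.
(* Operator of the effective problem: u_t + Fbar(Du/|Du|)|Du| = 0 *)
Definition Geff (x : pt) (X : sym2) (p : pt) : R := Fbar (hat p) * nrm p.

Definition u0 (x : pt) : R := - nrm x.

Definition superjet (u : pt -> R -> R) (x : pt) (t a : R) (p : pt) (X : sym2) : Prop :=
  forall eta, eta > 0 -> exists delta, delta > 0 /\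
    forall y s, s > 0 -> nrm (psub y x) < delta -> Rabs (s - t) < delta ->
      u y s <= u x t + a * (s - t) + dot p (psub y x)
               + / 2 * dot (mxv X (psub y x)) (psub y x)
               + eta * (Rabs (s - t) + nrm (psub y x) ^ 2).
Definition subjet (u : pt -> R -> R) (x : pt) (t a : R) (p : pt) (X : sym2) : Prop :=
  forall eta, eta > 0 -> exists delta, delta > 0 /\
    forall y s, s > 0 -> nrm (psub y x) < delta -> Rabs (s - t) < delta ->
      u y s >= u x t + a * (s - t) + dot p (psub y x)
               + / 2 * dot (mxv X (psub y x)) (psub y x)
               - eta * (Rabs (s - t) + nrm (psub y x) ^ 2).

(* G_*(x,X,p) <= r, where G_* is the lower semicontinuous envelope in (X,p)
   of G (which is only defined for p <> 0): liminf_{(Y,q)->(X,p), q<>0} G <= r *)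
Definition lower_env_le (G : pt -> sym2 -> pt -> R) (x : pt) (X : sym2) (p : pt) (r : R) : Prop :=
  forall eta delta, eta > 0 -> delta > 0 -> exists Y q,
    q <> (0, 0) /\ sym_dist Y X + nrm (psub q p) < delta /\ G x Y q <= r + eta.
(* G^*(x,X,p) >= r, upper semicontinuous envelope *)
Definition upper_env_ge (G : pt -> sym2 -> pt -> R) (x : pt) (X : sym2) (p : pt) (r : R) : Prop :=
  forall eta delta, eta > 0 -> delta > 0 -> exists Y q,
    q <> (0, 0) /\ sym_dist Y X + nrm (psub q p) < delta /\ G x Y q >= r - eta.

(* uniqueness class: uniformly continuous on R^2 x [0,T] for every T *)
Definition unif_cont_strips (u : pt -> R -> R) : Prop :=
  forall T, T > 0 -> forall eta, eta > 0 -> exists delta, delta > 0 /\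
    forall x y t s, 0 <= t <= T -> 0 <= s <= T ->
      nrm (psub x y) < delta -> Rabs (t - s) < delta ->
      Rabs (u x t - u y s) < eta.

(* u is a viscosity solution of u_t + G(x, D^2u, Du) = 0 in R^2 x (0,oo),
   u(.,0) = v0, in the sense for (geometric, singular at Du = 0) equations
   via semicontinuous envelopes. *)
Definition visc_sol (G : pt -> sym2 -> pt -> R) (v0 : pt -> R) (u : pt -> R -> R) : Prop :=
  unif_cont_strips u /\
  (forall x, u x 0 = v0 x) /\
  (forall x t, t > 0 ->
     (forall a p X, superjet u x t a p X -> lower_env_le G x X p (- a)) /\
     (forall a p X, subjet u x t a p X -> upper_env_ge G x X p (- a))).

(* With c = 1 the effective equation is u_t = |Du|, whose solution from u0 = -|x| vanishes on the
   cone |x| = t; we only need u >= 0 there.  For the eps-problem, psi(r) = -(r + eps ln (r/eps - 1))/2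
   makes psi(|x|) + t/2 an exact solution in |x| > eps which lies above u0 at t = 0, so that
   u^eps(x, t) <= psi(t) + t/2 - eps/2 = -(eps/2)(ln (t/eps - 1) + 1) on the cone.

   Both bounds are comparisons with explicit strict barriers: a slightly perturbed solution, plus a
   penalty K (s - t)_+^2 after the time of interest (and, for psi, a cap near its singularity at
   r = eps).  The growth of the solutions forces barrier minus solution (or the reverse) to attain
   an interior maximum on the strip R^2 x [0, t + 1]; there the second-order jet of the barrier is a
   jet of the solution, which the strict inequality satisfied by the barrier rules out.  For u the
   barrier is ramp (|x| - (1 - th) s) - th s - th sqrt (1 + |x|^2), where ramp smooths
   z |-> - max dl z. *)

From Stdlib Require Import Reals ZArith Lra Psatz ClassicalEpsilon.
From Coquelicot Require Import Coquelicot.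
Open Scope R_scope.

(** * Plane geometry *)

Lemma Rabs_mult_le a b A B : Rabs a <= A -> Rabs b <= B -> Rabs (a * b) <= A * B.
Proof. intros; rewrite Rabs_mult; apply Rmult_le_compat; auto; apply Rabs_pos. Qed.

Lemma Rabs_div_pos_le a D n : 0 < n -> Rabs a <= D -> Rabs (a / n) <= D / n.
Proof.
  intros Hn Ha; unfold Rdiv; rewrite Rabs_mult, (Rabs_right (/ n)) by (left; apply Rinv_0_lt_compat; lra).
  apply Rmult_le_compat_r; [left; apply Rinv_0_lt_compat; lra | exact Ha].
Qed.

Lemma dot_self_ge0 p : 0 <= dot p p.
Proof. unfold dot; nra. Qed.

Lemma nrm_ge0 p : 0 <= nrm p.
Proof. apply sqrt_pos. Qed.

Lemma nrm_sqr p : nrm p * nrm p = dot p p.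
Proof. apply sqrt_sqrt, dot_self_ge0. Qed.

Lemma nrm_ge_of_sqr a p : 0 <= a -> a * a <= dot p p -> a <= nrm p.
Proof.
  intros Ha Hap; unfold nrm; rewrite <- (sqrt_square a) by exact Ha.
  now apply sqrt_le_1_alt.
Qed.

Lemma nrm_le_of_sqr a p : 0 <= a -> dot p p <= a * a -> nrm p <= a.
Proof.
  intros Ha Hap; unfold nrm; rewrite <- (sqrt_square a) by exact Ha.
  now apply sqrt_le_1_alt.
Qed.

Lemma Rabs_fst_le_nrm p : Rabs (fst p) <= nrm p.
Proof.
  apply nrm_ge_of_sqr; [apply Rabs_pos|].
  rewrite <- Rabs_mult, Rabs_right by nra; unfold dot; nra.
Qed.

Lemma Rabs_snd_le_nrm p : Rabs (snd p) <= nrm p.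
Proof.
  apply nrm_ge_of_sqr; [apply Rabs_pos|].
  rewrite <- Rabs_mult, Rabs_right by nra; unfold dot; nra.
Qed.

Lemma nrm_le_Rabs_add p : nrm p <= Rabs (fst p) + Rabs (snd p).
Proof.
  destruct p as [a b]; simpl.
  pose proof (Rabs_pos a); pose proof (Rabs_pos b).
  apply nrm_le_of_sqr; [lra|]; unfold dot; simpl.
  pose proof (Rsqr_abs a); pose proof (Rsqr_abs b); unfold Rsqr in *; nra.
Qed.

Lemma dot_Cauchy_Schwarz p q : Rabs (dot p q) <= nrm p * nrm q.
Proof.
  assert (H : dot p q * dot p q <= dot p p * dot q q).
  { destruct p as [a b], q as [c0 d]; unfold dot; simpl.
    pose proof (Rle_0_sqr (a * d - b * c0)); unfold Rsqr in *; nra. }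
  pose proof (nrm_sqr p); pose proof (nrm_sqr q); pose proof (nrm_ge0 p); pose proof (nrm_ge0 q).
  rewrite <- (Rabs_right (nrm p * nrm q)) by nra.
  apply Rsqr_le_abs_0; unfold Rsqr; nra.
Qed.

Lemma dot_le_nrm_mul p q : dot p q <= nrm p * nrm q.
Proof. pose proof (dot_Cauchy_Schwarz p q); pose proof (Rle_abs (dot p q)); lra. Qed.

Lemma dot_psub_expand y z :
  dot y y = dot z z + 2 * dot z (psub y z) + dot (psub y z) (psub y z).
Proof. destruct y, z; unfold dot, psub; simpl; ring. Qed.

Lemma dot_pscale_l k z h : dot (pscale k z) h = k * dot z h.
Proof. destruct z, h; unfold dot, pscale; simpl; ring. Qed.

Lemma nrm_psub_sym y z : nrm (psub y z) = nrm (psub z y).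
Proof. destruct y, z; unfold nrm, dot, psub; simpl; f_equal; ring. Qed.

Lemma nrm_zero : nrm (0, 0) = 0.
Proof. unfold nrm, dot; simpl; rewrite Rmult_0_l, Rplus_0_l; apply sqrt_0. Qed.

Lemma nrm_psub_diag z : nrm (psub z z) = 0.
Proof. unfold psub; rewrite !Rminus_diag; apply nrm_zero. Qed.

Lemma nrm_le_add_psub y z : nrm y <= nrm z + nrm (psub y z).
Proof.
  pose proof (nrm_ge0 z); pose proof (nrm_ge0 (psub y z)).
  apply nrm_le_of_sqr; [lra|].
  pose proof (dot_le_nrm_mul z (psub y z)); pose proof (nrm_sqr z);
    pose proof (nrm_sqr (psub y z)); rewrite (dot_psub_expand y z); nra.
Qed.

Lemma nrm_lipschitz y z : Rabs (nrm y - nrm z) <= nrm (psub y z).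
Proof.
  pose proof (nrm_le_add_psub y z); pose proof (nrm_le_add_psub z y).
  pose proof (nrm_psub_sym y z); apply Rabs_le; lra.
Qed.

Lemma nrm_eq0_inv p : nrm p = 0 -> p = (0, 0).
Proof.
  intros H; pose proof (nrm_sqr p) as Hp; rewrite H in Hp.
  destruct p as [a b]; unfold dot in Hp; simpl in Hp.
  f_equal; nra.
Qed.

Lemma nrm_gt0 q : q <> (0, 0) -> 0 < nrm q.
Proof.
  intros Hq; destruct (Rle_lt_or_eq_dec 0 (nrm q) (nrm_ge0 q)) as [|Hz]; [lra|].
  now destruct (Hq (nrm_eq0_inv q (eq_sym Hz))).
Qed.

Lemma nrm_pscale k z : nrm (pscale k z) = Rabs k * nrm z.
Proof.
  destruct z as [a b]; unfold nrm, dot, pscale; simpl.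
  replace (k * a * (k * a) + k * b * (k * b)) with (Rsqr k * (a * a + b * b))
    by (unfold Rsqr; ring).
  rewrite sqrt_mult by (unfold Rsqr; nra); now rewrite sqrt_Rsqr_abs.
Qed.

Lemma nrm_hat q : q <> (0, 0) -> nrm (hat q) = 1.
Proof.
  intros Hq; pose proof (nrm_gt0 q Hq); unfold hat.
  rewrite nrm_pscale, Rabs_right by (left; apply Rinv_0_lt_compat; lra); field; lra.
Qed.

Lemma sqrt_le_tangent A B : 0 < A -> 0 <= A + B -> sqrt (A + B) <= sqrt A + B / (2 * sqrt A).
Proof.
  intros HA HAB; pose proof (sqrt_lt_R0 A HA); pose proof (sqrt_sqrt A (Rlt_le _ _ HA)).
  set (s := sqrt A) in *; clearbody s; subst A.
  assert (Htan : 0 <= s + B / (2 * s)).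
  { replace (s + B / (2 * s)) with ((2 * (s * s) + B) / (2 * s)) by (field; lra).
    apply Rmult_le_pos; [lra | left; apply Rinv_0_lt_compat; lra]. }
  rewrite <- (sqrt_square _ Htan); apply sqrt_le_1_alt.
  replace ((s + B / (2 * s)) * (s + B / (2 * s))) with (s * s + B + B * B / (4 * (s * s)))
    by (field; lra).
  assert (0 <= B * B / (4 * (s * s))) by (apply Rmult_le_pos; [nra | left; apply Rinv_0_lt_compat; nra]).
  lra.
Qed.

Lemma nrm_le_tangent y z : 0 < nrm z ->
  nrm y <= nrm z + dot z (psub y z) / nrm z + dot (psub y z) (psub y z) / (2 * nrm z).
Proof.
  intros Hz; pose proof (nrm_sqr z).
  pose proof (sqrt_le_tangent (dot z z) (2 * dot z (psub y z) + dot (psub y z) (psub y z))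
    ltac:(nra)) as Ht.
  replace (dot z z + (2 * dot z (psub y z) + dot (psub y z) (psub y z))) with (dot y y) in Ht
    by (rewrite (dot_psub_expand y z); ring).
  specialize (Ht (dot_self_ge0 y)); fold (nrm y) (nrm z) in Ht.
  enough ((2 * dot z (psub y z) + dot (psub y z) (psub y z)) / (2 * nrm z) =
    dot z (psub y z) / nrm z + dot (psub y z) (psub y z) / (2 * nrm z)) by lra.
  field; lra.
Qed.

Lemma one_le_sqrt1_dot z : 1 <= sqrt (1 + dot z z).
Proof. rewrite <- sqrt_1 at 1; apply sqrt_le_1_alt; pose proof (dot_self_ge0 z); lra. Qed.

Lemma nrm_le_sqrt1_dot z : nrm z <= sqrt (1 + dot z z).
Proof. apply sqrt_le_1_alt; lra. Qed.

Lemma sqrt1_dot_le_tangent y z :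
  sqrt (1 + dot y y) <=
  sqrt (1 + dot z z) + dot z (psub y z) / sqrt (1 + dot z z) + dot (psub y z) (psub y z) / 2.
Proof.
  pose proof (dot_self_ge0 z); pose proof (dot_self_ge0 y); pose proof (dot_self_ge0 (psub y z)).
  pose proof (sqrt_le_tangent (1 + dot z z) (2 * dot z (psub y z) + dot (psub y z) (psub y z))
    ltac:(lra)) as Ht.
  replace (1 + dot z z + (2 * dot z (psub y z) + dot (psub y z) (psub y z))) with (1 + dot y y) in Ht
    by (rewrite (dot_psub_expand y z); ring).
  specialize (Ht ltac:(lra)); pose proof (one_le_sqrt1_dot z).
  set (S := sqrt (1 + dot z z)) in *.
  assert (dot (psub y z) (psub y z) / (2 * S) <= dot (psub y z) (psub y z) / 2).
  { apply Rmult_le_compat_l; [lra|]; apply Rinv_le_contravar; lra. }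
  replace ((2 * dot z (psub y z) + dot (psub y z) (psub y z)) / (2 * S))
    with (dot z (psub y z) / S + dot (psub y z) (psub y z) / (2 * S)) in Ht by (field; lra).
  lra.
Qed.

Lemma sqrt1_dot_lipschitz y z :
  Rabs (sqrt (1 + dot y y) - sqrt (1 + dot z z)) <= nrm (psub y z).
Proof.
  eapply Rle_trans; [|apply nrm_lipschitz].
  rewrite <- (nrm_sqr y), <- (nrm_sqr z).
  pose proof (nrm_ge0 y); pose proof (nrm_ge0 z).
  set (a := nrm y) in *; set (b := nrm z) in *.
  pose proof (sqrt_sqrt (1 + a * a) ltac:(nra)); pose proof (sqrt_sqrt (1 + b * b) ltac:(nra)).
  pose proof (sqrt_pos (1 + a * a)); pose proof (sqrt_pos (1 + b * b)).
  set (A := sqrt (1 + a * a)) in *; set (B := sqrt (1 + b * b)) in *.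
  assert (a < A) by nra; assert (b < B) by nra.
  assert (E : (A - B) * (A + B) = (a - b) * (a + b)) by nra.
  destruct (Rle_dec b a); [rewrite (Rabs_right (a - b)) by lra | rewrite (Rabs_left (a - b)) by lra];
    apply Rabs_le; split; nra.
Qed.

Lemma sym_dist_ge0 X Y : 0 <= sym_dist X Y.
Proof.
  unfold sym_dist; pose proof (Rabs_pos (s11 X - s11 Y)); pose proof (Rabs_pos (s12 X - s12 Y));
    pose proof (Rabs_pos (s22 X - s22 Y)); lra.
Qed.

(** * Maxima on a strip *)

Definition attains_max {T : Type} (S : T -> Prop) (g : T -> R) : Prop :=
  exists m, S m /\ forall y, S y -> g y <= g m.

Definition clamp (a b x : R) : R := Rmax a (Rmin x b).

Lemma clamp_in a b x : a <= b -> a <= clamp a b x <= b.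
Proof. intros; unfold clamp, Rmax, Rmin; repeat destruct Rle_dec; lra. Qed.

Lemma clamp_id a b x : a <= x <= b -> clamp a b x = x.
Proof. intros; unfold clamp, Rmax, Rmin; repeat destruct Rle_dec; lra. Qed.

Lemma clamp_lipschitz a b x y : a <= b -> Rabs (clamp a b x - clamp a b y) <= Rabs (x - y).
Proof.
  intros; unfold clamp, Rmax, Rmin; repeat destruct Rle_dec;
    apply Rabs_le; split; unfold Rabs; destruct Rcase_abs; lra.
Qed.

Lemma interval_attains_max (g : R -> R) a b : a <= b ->
  (forall eta, 0 < eta -> exists d, 0 < d /\ forall x y, a <= x <= b -> a <= y <= b ->
     Rabs (x - y) < d -> Rabs (g x - g y) < eta) ->
  attains_max (fun x => a <= x <= b) g.
Proof.
  intros Hab Hu.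
  destruct (continuity_ab_maj (fun x => g (clamp a b x)) a b Hab) as [m [Hm Hma]].
  - intros x _ eta Heta; destruct (Hu eta Heta) as [d [Hd Hd']].
    exists d; split; [lra|]; intros y [_ Hy]; simpl; unfold R_dist in *.
    apply Hd'; try apply clamp_in; auto.
    eapply Rle_lt_trans; [apply clamp_lipschitz|]; eauto.
  - exists m; split; [exact Hma|]; intros x Hx; specialize (Hm x Hx).
    now rewrite !clamp_id in Hm.
Qed.

(* Maximising first over [S] for each fixed [x], then over [x]: the partial maximum is uniformly
   continuous in [x] because [G] is equicontinuous in [x]. *)
Lemma prod_attains_max {T : Type} (S : T -> Prop) (G : R -> T -> R) a b : a <= b ->
  (forall x, a <= x <= b -> attains_max S (G x)) ->
  (forall eta, 0 < eta -> exists d, 0 < d /\ forall x x' y, a <= x <= b -> a <= x' <= b -> S y ->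
     Rabs (x - x') < d -> Rabs (G x y - G x' y) < eta) ->
  attains_max (fun xy => a <= fst xy <= b /\ S (snd xy)) (fun xy => G (fst xy) (snd xy)).
Proof.
  intros Hab Hmax Hequi.
  assert (HY : forall x, {y | S y /\ forall y', S y' -> G (clamp a b x) y' <= G (clamp a b x) y}).
  { intro x; apply constructive_indefinite_description, Hmax, clamp_in, Hab. }
  set (Y x := proj1_sig (HY x)).
  assert (HYmax : forall x, a <= x <= b -> S (Y x) /\ forall y, S y -> G x y <= G x (Y x)).
  { intros x Hx; unfold Y; destruct (HY x) as [y Hy]; simpl; now rewrite clamp_id in Hy. }
  destruct (interval_attains_max (fun x => G x (Y x)) a b Hab) as [m [Hm Hmmax]].
  - intros eta Heta; destruct (Hequi eta Heta) as [d [Hd Hd']].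
    exists d; split; [exact Hd|]; intros x x' Hx Hx' Hxx'.
    destruct (HYmax x Hx) as [HSx HGx]; destruct (HYmax x' Hx') as [HSx' HGx'].
    specialize (HGx (Y x')); specialize (HGx' (Y x)).
    pose proof (Hd' x x' (Y x') Hx Hx' HSx' Hxx') as H1.
    rewrite Rabs_minus_sym in Hxx'; pose proof (Hd' x' x (Y x) Hx' Hx HSx Hxx') as H2.
    apply Rabs_lt_between in H1, H2.
    apply Rabs_lt_between; split; [specialize (HGx HSx') | specialize (HGx' HSx)]; lra.
  - exists (m, Y m); split; [split; [exact Hm | apply HYmax, Hm]|].
    intros [x y] [Hx Hy]; simpl in *.
    eapply Rle_trans; [apply (proj2 (HYmax x Hx)), Hy | apply Hmmax, Hx].
Qed.

(* Stated so that [unif_cont_strips u] unfolds to [forall T, T > 0 -> unif_cont_on T u]. *)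
Definition unif_cont_on (T : R) (g : pt -> R -> R) : Prop :=
  forall eta, eta > 0 -> exists delta, delta > 0 /\
    forall x y t s, 0 <= t <= T -> 0 <= s <= T ->
      nrm (psub x y) < delta -> Rabs (t - s) < delta ->
      Rabs (g x t - g y s) < eta.

Lemma unif_cont_on_sub T f g : unif_cont_on T f -> unif_cont_on T g ->
  unif_cont_on T (fun z s => f z s - g z s).
Proof.
  intros Hf Hg eta Heta.
  destruct (Hf (eta / 2) ltac:(lra)) as [d1 [Hd1 Hf']], (Hg (eta / 2) ltac:(lra)) as [d2 [Hd2 Hg']].
  exists (Rmin d1 d2); split; [now apply Rmin_glb_lt|].
  intros x y t s Ht Hs Hxy Hts.
  pose proof (Rmin_l d1 d2); pose proof (Rmin_r d1 d2).
  specialize (Hf' x y t s Ht Hs ltac:(lra) ltac:(lra)); specialize (Hg' x y t s Ht Hs ltac:(lra) ltac:(lra)).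
  apply Rabs_lt_between in Hf'; apply Rabs_lt_between in Hg'; apply Rabs_lt_between; lra.
Qed.

Lemma lipschitz_unif_cont_on T L g : 0 < L ->
  (forall z z' s s', 0 <= s <= T -> 0 <= s' <= T ->
     Rabs (g z s - g z' s') <= L * (nrm (psub z z') + Rabs (s - s'))) ->
  unif_cont_on T g.
Proof.
  intros HL Hg eta Heta; exists (eta / (2 * L)); split; [apply Rdiv_lt_0_compat; lra|].
  intros x y t s Ht Hs Hxy Hts; eapply Rle_lt_trans; [now apply Hg|].
  apply (Rmult_lt_compat_l L) in Hxy, Hts; try lra.
  replace (L * (eta / (2 * L))) with (eta / 2) in * by (field; lra); lra.
Qed.

Lemma square_strip_attains_max g B T : 0 <= B -> 0 <= T -> unif_cont_on T g ->
  exists z0 s0, (-B <= fst z0 <= B /\ -B <= snd z0 <= B) /\ 0 <= s0 <= T /\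
    forall z s, -B <= fst z <= B -> -B <= snd z <= B -> 0 <= s <= T -> g z s <= g z0 s0.
Proof.
  intros HB HT Hg.
  assert (Hcoord : forall eta, 0 < eta -> exists d, 0 < d /\ forall z z' s s',
      0 <= s <= T -> 0 <= s' <= T -> Rabs (fst z - fst z') < d -> Rabs (snd z - snd z') < d ->
      Rabs (s - s') < d -> Rabs (g z s - g z' s') < eta).
  { intros eta Heta; destruct (Hg eta Heta) as [d [Hd Hd']]; exists (d / 2); split; [lra|].
    intros z z' s s' Hs Hs' H1 H2 H3; apply Hd'; try lra.
    eapply Rle_lt_trans; [apply nrm_le_Rabs_add|]; destruct z, z'; simpl in *; lra. }
  destruct (prod_attains_max (fun z : pt => -B <= fst z <= B /\ -B <= snd z <= B)
    (fun s z => g z s) 0 T HT) as [[s0 z0] [[Hs0 Hz0] Hmax]]; simpl in *.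
  - intros s Hs.
    destruct (prod_attains_max (fun b => -B <= b <= B) (fun a b => g (a, b) s) (-B) B ltac:(lra))
      as [z0 [Hz0 Hmax]].
    + intros a Ha; apply interval_attains_max; [lra|].
      intros eta Heta; destruct (Hcoord eta Heta) as [d [Hd Hd']]; exists d; split; [exact Hd|].
      intros; apply Hd'; simpl; rewrite ?Rminus_diag, ?Rabs_R0; auto.
    + intros eta Heta; destruct (Hcoord eta Heta) as [d [Hd Hd']]; exists d; split; [exact Hd|].
      intros; apply Hd'; simpl; rewrite ?Rminus_diag, ?Rabs_R0; auto.
    + exists z0; split; [exact Hz0|]; intros [a b] Hab; destruct z0; apply (Hmax (a, b) Hab).
  - intros eta Heta; destruct (Hcoord eta Heta) as [d [Hd Hd']]; exists d; split; [exact Hd|].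
    intros; apply Hd'; rewrite ?Rminus_diag, ?Rabs_R0; auto.
  - exists z0, s0; repeat split; try tauto.
    intros z s Hz1 Hz2 Hs; apply (Hmax (s, z)); simpl; tauto.
Qed.

Lemma strip_interior_max g T Rad : 0 <= T -> unif_cont_on T g ->
  (exists z s, 0 <= s <= T /\ 0 < g z s) ->
  (forall z s, 0 <= s <= T -> 0 < g z s -> nrm z < Rad) ->
  (forall z, g z 0 <= 0) -> (forall z, g z T <= 0) ->
  exists z0 s0, 0 < s0 < T /\ 0 < g z0 s0 /\ forall z s, 0 <= s <= T -> g z s <= g z0 s0.
Proof.
  intros HT Hg [zs [ss [Hss Hpos]]] Hball Hbot Htop.
  assert (Hsq : forall z, nrm z < Rad -> -Rad <= fst z <= Rad /\ -Rad <= snd z <= Rad).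
  { intros z Hz; pose proof (Rabs_fst_le_nrm z); pose proof (Rabs_snd_le_nrm z).
    split; apply Rabs_le_between; lra. }
  pose proof (Hball zs ss Hss Hpos); pose proof (nrm_ge0 zs).
  destruct (square_strip_attains_max g Rad T ltac:(lra) HT Hg) as [z0 [s0 [Hz0 [Hs0 Hmax]]]].
  assert (Hg0 : 0 < g z0 s0) by (destruct (Hsq zs) as [H1 H2]; auto; pose proof (Hmax zs ss H1 H2 Hss); lra).
  exists z0, s0; split; [|split; [exact Hg0|]].
  - split; [apply Rnot_le_lt; intros Hle | apply Rnot_le_lt; intros Hle].
    + replace s0 with 0 in Hg0 by lra; pose proof (Hbot z0); lra.
    + replace s0 with T in Hg0 by lra; pose proof (Htop z0); lra.
  - intros z s Hs; destruct (Rlt_dec 0 (g z s)) as [Hp|Hp]; [|lra].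
    destruct (Hsq z (Hball z s Hs Hp)); auto.
Qed.

Lemma unif_cont_time_growth v T : unif_cont_on T v -> 0 < T ->
  exists C, 0 <= C /\ forall z s, 0 <= s <= T -> Rabs (v z s - v z 0) <= C.
Proof.
  intros Hv HT; destruct (Hv 1 Rlt_0_1) as [d [Hd Hd']].
  destruct (archimed (T / d)) as [HN _].
  assert (HTd : 0 < T / d) by (apply Rdiv_lt_0_compat; lra).
  assert (HNpos : (0 <= up (T / d))%Z) by (apply le_IZR; lra).
  set (N := Z.to_nat (up (T / d))).
  assert (HNR : T / d < INR N) by (unfold N; rewrite INR_IZR_INZ, Z2Nat.id; auto).
  exists (INR N); split; [apply pos_INR|]; intros z s Hs.
  set (h := s / INR N).
  assert (Hh : 0 <= h < d).
  { split; [apply Rmult_le_pos; [lra | left; apply Rinv_0_lt_compat; lra]|].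
    apply (Rmult_lt_reg_r (INR N)); [lra|]; unfold h; replace (s / INR N * INR N) with s by (field; lra).
    apply (Rmult_lt_compat_l d) in HNR; [|lra]; replace (d * (T / d)) with T in HNR by (field; lra); lra. }
  assert (Hsh : s = INR N * h) by (unfold h; field; lra).
  assert (Hwalk : forall k, (k <= N)%nat -> Rabs (v z (INR k * h) - v z 0) <= INR k).
  { induction k as [|k IH]; intros Hk; [simpl; rewrite Rmult_0_l, Rminus_diag, Rabs_R0; lra|].
    assert (Hk' : INR (S k) <= INR N) by (apply le_INR; lia).
    rewrite S_INR in *; pose proof (pos_INR k).
    assert (Hstep : Rabs (v z ((INR k + 1) * h) - v z (INR k * h)) < 1).
    { apply Hd'; try (split; nra); [rewrite nrm_psub_diag; lra|].
      replace ((INR k + 1) * h - INR k * h) with h by ring; rewrite Rabs_right; lra. }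
    specialize (IH ltac:(lia)); apply Rabs_lt_between in Hstep; apply Rabs_le_between in IH.
    apply Rabs_le_between; lra. }
  rewrite Hsh; apply Hwalk, Nat.le_refl.
Qed.

(** * Jets and envelopes *)

Lemma superjet_of_max_sub v phi z0 s0 T a p X : 0 < s0 < T ->
  (forall y s, 0 <= s <= T -> v y s - phi y s <= v z0 s0 - phi z0 s0) ->
  superjet phi z0 s0 a p X -> superjet v z0 s0 a p X.
Proof.
  intros Hs0 Hmax Hphi eta Heta; destruct (Hphi eta Heta) as [d [Hd Hd']].
  exists (Rmin d (T - s0)); split; [apply Rmin_glb_lt; lra|].
  intros y s Hs Hy Hss; pose proof (Rmin_l d (T - s0)); pose proof (Rmin_r d (T - s0)).
  apply Rabs_lt_between in Hss as Hss'.
  specialize (Hd' y s Hs ltac:(lra) ltac:(lra)); specialize (Hmax y s ltac:(lra)); lra.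
Qed.

Lemma subjet_of_min_sub v phi z0 s0 T a p X : 0 < s0 < T ->
  (forall y s, 0 <= s <= T -> v z0 s0 - phi z0 s0 <= v y s - phi y s) ->
  subjet phi z0 s0 a p X -> subjet v z0 s0 a p X.
Proof.
  intros Hs0 Hmin Hphi eta Heta; destruct (Hphi eta Heta) as [d [Hd Hd']].
  exists (Rmin d (T - s0)); split; [apply Rmin_glb_lt; lra|].
  intros y s Hs Hy Hss; pose proof (Rmin_l d (T - s0)); pose proof (Rmin_r d (T - s0)).
  apply Rabs_lt_between in Hss as Hss'.
  specialize (Hd' y s Hs ltac:(lra) ltac:(lra)); specialize (Hmin y s ltac:(lra)); lra.
Qed.

Lemma quadratic_time_small C eta : 0 < C -> 0 < eta -> forall s s0,
  Rabs (s - s0) < eta / C -> C * (s - s0) ^ 2 <= eta * Rabs (s - s0).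
Proof.
  intros HC Heta s s0 Hs; pose proof (Rabs_pos (s - s0)).
  rewrite <- pow2_abs.
  apply (Rmult_lt_compat_l C) in Hs; [|lra]; replace (C * (eta / C)) with eta in Hs by (field; lra).
  nra.
Qed.

Lemma superjet_of_quadratic_bound phi z0 s0 a p X C d : 0 < d -> 0 < C ->
  (forall y s, 0 < s -> nrm (psub y z0) < d -> Rabs (s - s0) < d ->
     phi y s <= phi z0 s0 + a * (s - s0) + dot p (psub y z0)
                + / 2 * dot (mxv X (psub y z0)) (psub y z0) + C * (s - s0) ^ 2) ->
  superjet phi z0 s0 a p X.
Proof.
  intros Hd HC Hphi eta Heta; exists (Rmin d (eta / C)); split;
    [apply Rmin_glb_lt; [lra | apply Rdiv_lt_0_compat; lra]|].
  intros y s Hs Hy Hss; pose proof (Rmin_l d (eta / C)); pose proof (Rmin_r d (eta / C)).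
  pose proof (quadratic_time_small C eta HC Heta s s0 ltac:(lra)).
  pose proof (Rmult_le_pos eta (nrm (psub y z0) ^ 2) ltac:(lra) (pow2_ge_0 _)).
  specialize (Hphi y s Hs ltac:(lra) ltac:(lra)); lra.
Qed.

Lemma subjet_of_quadratic_bound phi z0 s0 a p X C : 0 < C ->
  (forall y s, 0 < s ->
     phi z0 s0 + a * (s - s0) + dot p (psub y z0)
     + / 2 * dot (mxv X (psub y z0)) (psub y z0) - C * (s - s0) ^ 2 <= phi y s) ->
  subjet phi z0 s0 a p X.
Proof.
  intros HC Hphi eta Heta; exists (eta / C); split; [apply Rdiv_lt_0_compat; lra|].
  intros y s Hs Hy Hss; pose proof (quadratic_time_small C eta HC Heta s s0 Hss).
  pose proof (Rmult_le_pos eta (nrm (psub y z0) ^ 2) ltac:(lra) (pow2_ge_0 _)).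
  specialize (Hphi y s Hs); lra.
Qed.

Lemma lower_env_le_of_continuity G x X p r :
  (forall ep, 0 < ep -> exists dd, 0 < dd /\ forall Y q, q <> (0, 0) ->
     sym_dist Y X + nrm (psub q p) < dd -> G x X p - ep <= G x Y q) ->
  lower_env_le G x X p r -> G x X p <= r.
Proof.
  intros Hcont Henv; apply Rnot_lt_le; intros Hlt.
  set (ep := (G x X p - r) / 3).
  destruct (Hcont ep ltac:(unfold ep; lra)) as [dd [Hdd Hdd']].
  destruct (Henv ep dd ltac:(unfold ep; lra) Hdd) as [Y [q [Hq [HYq HG]]]].
  specialize (Hdd' Y q Hq HYq); unfold ep in *; lra.
Qed.

Lemma upper_env_ge_of_continuity G x X p r :
  (forall ep, 0 < ep -> exists dd, 0 < dd /\ forall Y q, q <> (0, 0) ->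
     sym_dist Y X + nrm (psub q p) < dd -> G x Y q <= G x X p + ep) ->
  upper_env_ge G x X p r -> r <= G x X p.
Proof.
  intros Hcont Henv; apply Rnot_lt_le; intros Hlt.
  set (ep := (r - G x X p) / 3).
  destruct (Hcont ep ltac:(unfold ep; lra)) as [dd [Hdd Hdd']].
  destruct (Henv ep dd ltac:(unfold ep; lra) Hdd) as [Y [q [Hq [HYq HG]]]].
  specialize (Hdd' Y q Hq HYq); unfold ep in *; lra.
Qed.

Lemma visc_sol_near_initial G u T : visc_sol G u0 u -> 0 < T ->
  exists C, 0 <= C /\ forall z s, 0 <= s <= T -> - nrm z - C <= u z s <= - nrm z + C.
Proof.
  intros [Huc [Hinit _]] HT.
  destruct (unif_cont_time_growth u T (Huc T HT) HT) as [C [HC0 HC]].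
  exists C; split; [exact HC0|]; intros z s Hs; specialize (HC z s Hs).
  rewrite Hinit in HC; unfold u0 in HC; apply Rabs_le_between in HC; lra.
Qed.

(** * The effective problem *)

Definition ppart (x : R) : R := Rmax 0 x.

Definition penalty (t K s : R) : R := K * (ppart (s - t) * ppart (s - t)).

Lemma ppart_ge0 x : 0 <= ppart x.
Proof. apply Rmax_l. Qed.

Lemma penalty_ge0 t K s : 0 <= K -> 0 <= penalty t K s.
Proof. intros; pose proof (ppart_ge0 (s - t)); unfold penalty; apply Rmult_le_pos; nra. Qed.

Lemma penalty_before t K s : s <= t -> penalty t K s = 0.
Proof. intros; unfold penalty, ppart; rewrite Rmax_left by lra; ring. Qed.

Lemma penalty_horizon t K : penalty t K (t + 1) = K.
Proof. unfold penalty, ppart; rewrite Rmax_right by lra; ring. Qed.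

Lemma penalty_le_expand t K s0 s : 0 <= K ->
  penalty t K s <= penalty t K s0 + 2 * K * ppart (s0 - t) * (s - s0) + K * (s - s0) ^ 2.
Proof.
  intros HK; unfold penalty.
  enough (ppart (s - t) * ppart (s - t) <=
    ppart (s0 - t) * ppart (s0 - t) + 2 * ppart (s0 - t) * (s - s0) + (s - s0) * (s - s0)) by nra.
  pose proof (Rle_0_sqr (s - s0)); unfold Rsqr in *.
  unfold ppart, Rmax; repeat destruct Rle_dec; nra.
Qed.

Lemma penalty_lipschitz t K T s s' : 0 <= K -> 0 < t -> 0 <= s <= T -> 0 <= s' <= T ->
  Rabs (penalty t K s - penalty t K s') <= 2 * K * T * Rabs (s - s').
Proof.
  intros HK Ht Hs Hs'; unfold penalty.
  replace (2 * K * T * Rabs (s - s')) with (K * (2 * T * Rabs (s - s'))) by ring.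
  rewrite <- Rmult_minus_distr_l, Rabs_mult, (Rabs_right K) by lra.
  apply Rmult_le_compat_l; [lra|].
  unfold ppart, Rmax; repeat destruct Rle_dec; unfold Rabs; repeat destruct Rcase_abs; nra.
Qed.

(* A C^{1,1} concave smoothing of [z |-> - Rmax dl z]: it equals [- dl] for [z <= 0], [- z] for
   [z >= 2 dl], and is quadratic in between. *)
Definition ramp (dl z : R) : R :=
  if Rle_dec z 0 then - dl else if Rle_dec z (2 * dl) then - dl - z * z / (4 * dl) else - z.

Definition dramp (dl z : R) : R :=
  if Rle_dec z 0 then 0 else if Rle_dec z (2 * dl) then - z / (2 * dl) else - 1.

Section Ramp.

Variable dl : R.
Hypothesis Hdl : 0 < dl.

Let inv4_pos : 0 < / (4 * dl).
Proof. apply Rinv_0_lt_compat; lra. Qed.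

Let inv4_dl : 1 = 4 * dl * / (4 * dl).
Proof. field; lra. Qed.

Lemma ramp_le z : ramp dl z <= - z /\ ramp dl z <= - dl.
Proof.
  unfold ramp, Rdiv; destruct Rle_dec; [lra|]; destruct Rle_dec; [|lra].
  assert (0 <= (z - 2 * dl) * (z - 2 * dl) * / (4 * dl)) by (apply Rmult_le_pos; nra).
  assert (0 <= z * z * / (4 * dl)) by (apply Rmult_le_pos; nra).
  split; nra.
Qed.

Lemma ramp_ge z : 0 <= z -> - dl - z <= ramp dl z.
Proof.
  intros Hz; unfold ramp, Rdiv; destruct Rle_dec; [lra|]; destruct Rle_dec; [|lra].
  enough (z * z * / (4 * dl) <= z) by lra.
  apply (Rmult_le_reg_r (4 * dl)); [lra|]; rewrite Rmult_assoc, Rinv_l by lra; nra.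
Qed.

Lemma dramp_bounds z : -1 <= dramp dl z <= 0.
Proof.
  unfold dramp; destruct Rle_dec; [lra|]; destruct Rle_dec; [|lra].
  assert (0 < / (2 * dl)) by (apply Rinv_0_lt_compat; lra).
  assert (z * / (2 * dl) <= 1)
    by (apply (Rmult_le_reg_r (2 * dl)); [lra|]; rewrite Rmult_assoc, Rinv_l by lra; lra).
  unfold Rdiv; split; nra.
Qed.

Lemma dramp_of_nonpos z : z <= 0 -> dramp dl z = 0.
Proof. intros; unfold dramp; destruct Rle_dec; lra. Qed.

Lemma ramp_ge_tangent z d : ramp dl z + dramp dl z * d - d * d / (4 * dl) <= ramp dl (z + d).
Proof.
  unfold ramp, dramp, Rdiv.
  replace (/ (2 * dl)) with (2 * / (4 * dl)) by (field; lra).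
  pose proof inv4_pos; pose proof inv4_dl; set (i := / (4 * dl)) in *.
  assert ((z + d) * (z + d) * i >= 0) by (apply Rle_ge, Rmult_le_pos; [apply Rle_0_sqr | lra]).
  assert ((z + d - 2 * dl) * (z + d - 2 * dl) * i >= 0)
    by (apply Rle_ge, Rmult_le_pos; [apply Rle_0_sqr | lra]).
  assert (dl = 2 * dl * (2 * dl) * i) by (unfold i; field; lra).
  assert ((z + d) * (z + d) * i - (z + d) + dl = (z + d - 2 * dl) * (z + d - 2 * dl) * i)
    by (unfold i; field; lra).
  repeat destruct Rle_dec; nra.
Qed.

Lemma ramp_lipschitz a b : Rabs (ramp dl a - ramp dl b) <= Rabs (a - b).
Proof.
  unfold ramp, Rdiv; pose proof inv4_pos; pose proof inv4_dl; set (i := / (4 * dl)) in *.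
  repeat destruct Rle_dec; unfold Rabs; repeat destruct Rcase_abs; nra.
Qed.

End Ramp.

Lemma Geff_eq x X p : Geff x X p = - nrm p.
Proof.
  unfold Geff, Fbar; destruct (Req_dec (nrm p) 0) as [H0|H0].
  - rewrite H0; ring.
  - rewrite nrm_hat; [ring|]; intros ->; apply H0, nrm_zero.
Qed.

Lemma eff_subjet_slope_bound u z0 s0 a p X : visc_sol Geff u0 u -> 0 < s0 ->
  subjet u z0 s0 a p X -> nrm p <= a.
Proof.
  intros [_ [_ Hjet]] Hs0 Hsub.
  enough (- a <= Geff z0 X p) by (rewrite Geff_eq in *; lra).
  apply (upper_env_ge_of_continuity Geff z0 X p (- a)); [| exact (proj2 (Hjet z0 s0 Hs0) a p X Hsub)].
  intros ep Hep; exists ep; split; [exact Hep|]; intros Y q _ Hq.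
  rewrite !Geff_eq; pose proof (nrm_lipschitz p q) as Hlip; rewrite nrm_psub_sym in Hq.
  pose proof (sym_dist_ge0 Y X); apply Rabs_le_between in Hlip; lra.
Qed.

Definition eff_barrier_core (th dl : R) (z : pt) (s : R) : R :=
  ramp dl (nrm z - (1 - th) * s) - th * s - th * sqrt (1 + dot z z).

Definition eff_barrier (t th dl K : R) (z : pt) (s : R) : R :=
  eff_barrier_core th dl z s - penalty t K s.

Lemma nonpos_mul_nrm_increment c y z : c <= 0 -> (nrm z = 0 -> c = 0) ->
  c / nrm z * dot z (psub y z) + c / nrm z * dot (psub y z) (psub y z) / 2 <= c * (nrm y - nrm z).
Proof.
  intros Hc Hc0; destruct (Rle_lt_or_eq_dec 0 (nrm z) (nrm_ge0 z)) as [Hz|Hz].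
  - pose proof (nrm_le_tangent y z Hz) as Htan.
    replace (c / nrm z * dot z (psub y z) + c / nrm z * dot (psub y z) (psub y z) / 2)
      with (c * (dot z (psub y z) / nrm z + dot (psub y z) (psub y z) / (2 * nrm z))) by (field; lra).
    apply Rmult_le_compat_neg_l; lra.
  - rewrite (Hc0 (eq_sym Hz)); unfold Rdiv; lra.
Qed.

Lemma quad_form_scalar m h : / 2 * dot (mxv (Sym2 m 0 m) h) h = m / 2 * dot h h.
Proof. unfold mxv, dot; simpl; field. Qed.

Section EffectiveBarrier.

Variables th dl : R.
Hypothesis Hth : 0 < th < 1.
Hypothesis Hdl : 0 < dl.

Lemma eff_barrier_core_le z s : 0 <= s -> eff_barrier_core th dl z s <= - (1 + th) * nrm z + s.
Proof.
  intros Hs; unfold eff_barrier_core; destruct (ramp_le dl Hdl (nrm z - (1 - th) * s)).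
  pose proof (nrm_le_sqrt1_dot z); nra.
Qed.

Lemma eff_barrier_core_initial z : eff_barrier_core th dl z 0 <= - nrm z - th.
Proof.
  unfold eff_barrier_core; rewrite Rmult_0_r, Rminus_0_r.
  destruct (ramp_le dl Hdl (nrm z)); pose proof (one_le_sqrt1_dot z); nra.
Qed.

Lemma eff_barrier_core_on_cone x t : 0 <= t -> nrm x = t ->
  - dl - 2 * th * t - th * sqrt (1 + t * t) <= eff_barrier_core th dl x t.
Proof.
  intros Ht Hx; unfold eff_barrier_core; rewrite <- nrm_sqr, Hx.
  replace (t - (1 - th) * t) with (th * t) by ring.
  pose proof (ramp_ge dl Hdl (th * t) ltac:(nra)); lra.
Qed.

Lemma eff_barrier_core_lipschitz z z' s s' :
  Rabs (eff_barrier_core th dl z s - eff_barrier_core th dl z' s') <= 2 * (nrm (psub z z') + Rabs (s - s')).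
Proof.
  unfold eff_barrier_core.
  assert (Hr : Rabs (ramp dl (nrm z - (1 - th) * s) - ramp dl (nrm z' - (1 - th) * s'))
               <= nrm (psub z z') + Rabs (s - s')).
  { eapply Rle_trans; [apply ramp_lipschitz, Hdl|].
    replace (nrm z - (1 - th) * s - (nrm z' - (1 - th) * s'))
      with ((nrm z - nrm z') + (1 - th) * (s' - s)) by ring.
    eapply Rle_trans; [apply Rabs_triang|];
      rewrite Rabs_mult, (Rabs_right (1 - th)), (Rabs_minus_sym s') by lra.
    pose proof (nrm_lipschitz z z'); pose proof (Rabs_pos (s - s')); nra. }
  pose proof (sqrt1_dot_lipschitz z z') as Hq; pose proof (Rabs_pos (s - s')).
  apply Rabs_le_between in Hr, Hq; apply Rabs_le_between.
  destruct (Rle_dec s' s); [rewrite Rabs_right in * by lra | rewrite Rabs_left in * by lra]; split; nra.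
Qed.

Lemma eff_barrier_core_ge_quadratic z0 s0 y s : 0 <= s0 ->
  let h0 := dramp dl (nrm z0 - (1 - th) * s0) in
  let S := sqrt (1 + dot z0 z0) in
  eff_barrier_core th dl z0 s0 + (- (1 - th) * h0 - th) * (s - s0)
  + dot (pscale (h0 / nrm z0 - th / S) z0) (psub y z0)
  - (- h0 / nrm z0 + / dl + th) / 2 * dot (psub y z0) (psub y z0)
  - / (2 * dl) * (s - s0) ^ 2 <= eff_barrier_core th dl y s.
Proof.
  intros Hs0 h0 S; unfold eff_barrier_core; fold S; rewrite dot_pscale_l.
  set (z1 := nrm z0 - (1 - th) * s0) in h0.
  set (hh := dot (psub y z0) (psub y z0)); set (zh := dot z0 (psub y z0)).
  set (dn := nrm y - nrm z0); set (sg := s - s0).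
  replace (nrm y - (1 - th) * s) with (z1 + (dn - (1 - th) * sg)) by (unfold z1, dn, sg; ring).
  pose proof (ramp_ge_tangent dl Hdl z1 (dn - (1 - th) * sg)) as Htan; fold h0 in Htan.
  destruct (dramp_bounds dl Hdl z1) as [Hh0l Hh0u]; fold h0 in Hh0l, Hh0u.
  assert (Hdn : dn * dn <= hh).
  { pose proof (nrm_lipschitz y z0) as Hlip; apply Rabs_le_between in Hlip.
    pose proof (nrm_sqr (psub y z0)); pose proof (nrm_ge0 (psub y z0)); unfold dn, hh in *; nra. }
  assert (Hquad : (dn - (1 - th) * sg) * (dn - (1 - th) * sg) / (4 * dl)
                  <= hh / (2 * dl) + sg ^ 2 / (2 * dl)).
  { replace (hh / (2 * dl) + sg ^ 2 / (2 * dl)) with ((2 * hh + 2 * sg ^ 2) / (4 * dl)) by (field; lra).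
    apply Rmult_le_compat_r; [left; apply Rinv_0_lt_compat; lra|].
    pose proof (Rle_0_sqr (dn + (1 - th) * sg)); unfold Rsqr in *; nra. }
  assert (Hgrad : h0 / nrm z0 * zh + h0 / nrm z0 * hh / 2 <= h0 * dn).
  { apply nonpos_mul_nrm_increment; [exact Hh0u|]; intros Hz0.
    apply dramp_of_nonpos; unfold z1; rewrite Hz0; nra. }
  pose proof (sqrt1_dot_le_tangent y z0) as Hsq; fold S zh hh in Hsq.
  assert (HS : 1 <= S) by apply one_le_sqrt1_dot.
  assert (Hth_sq : th * sqrt (1 + dot y y) <= th * S + th / S * zh + th * hh / 2).
  { replace (th * S + th / S * zh + th * hh / 2) with (th * (S + zh / S + hh / 2)) by (field; lra).
    apply Rmult_le_compat_l; lra. }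
  assert (Hs : s = s0 + sg) by (unfold sg; ring).
  fold z1; clearbody z1 h0 S hh zh dn sg; subst s; unfold Rdiv in *; rewrite !Rinv_mult in *; lra.
Qed.

End EffectiveBarrier.

Lemma eff_barrier_subjet t th dl K z0 s0 : 0 < th < 1 -> 0 < dl -> 0 <= K -> 0 <= s0 ->
  let h0 := dramp dl (nrm z0 - (1 - th) * s0) in
  let M := - h0 / nrm z0 + / dl + th in
  subjet (eff_barrier t th dl K) z0 s0 (- (1 - th) * h0 - th - 2 * K * ppart (s0 - t))
    (pscale (h0 / nrm z0 - th / sqrt (1 + dot z0 z0)) z0) (Sym2 (- M) 0 (- M)).
Proof.
  intros Hth Hdl HK Hs0 h0 M.
  apply (subjet_of_quadratic_bound _ _ _ _ _ _ (/ (2 * dl) + K)).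
  { pose proof (Rinv_0_lt_compat (2 * dl) ltac:(lra)); lra. }
  intros y s _; rewrite quad_form_scalar; unfold eff_barrier.
  pose proof (eff_barrier_core_ge_quadratic th dl Hth Hdl z0 s0 y s Hs0) as Hcore.
  pose proof (penalty_le_expand t K s0 s HK); unfold M, h0 in *; lra.
Qed.

Lemma eff_barrier_slope_ge th z0 h0 : 0 < th -> h0 <= 0 -> (nrm z0 = 0 -> h0 = 0) ->
  - h0 <= nrm (pscale (h0 / nrm z0 - th / sqrt (1 + dot z0 z0)) z0).
Proof.
  intros Hth Hh0 Hz0; destruct (Rle_lt_or_eq_dec 0 (nrm z0) (nrm_ge0 z0)) as [Hp|He].
  - pose proof (one_le_sqrt1_dot z0); set (S := sqrt (1 + dot z0 z0)) in *.
    assert (0 <= th / S) by (apply Rmult_le_pos; [lra | left; apply Rinv_0_lt_compat; lra]).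
    assert (h0 / nrm z0 <= 0) by (pose proof (Rinv_0_lt_compat (nrm z0) Hp); unfold Rdiv; nra).
    rewrite nrm_pscale, Rabs_left1 by lra.
    replace (- (h0 / nrm z0 - th / S) * nrm z0) with (- h0 + th / S * nrm z0) by (field; split; lra); nra.
  - rewrite (Hz0 (eq_sym He)); pose proof (nrm_ge0 (pscale (0 / nrm z0 - th / sqrt (1 + dot z0 z0)) z0)); lra.
Qed.

Lemma eff_barrier_lipschitz t th dl K T z z' s s' : 0 < th < 1 -> 0 < dl -> 0 <= K -> 0 < t ->
  0 <= s <= T -> 0 <= s' <= T ->
  Rabs (eff_barrier t th dl K z s - eff_barrier t th dl K z' s')
  <= (2 + 2 * K * T) * (nrm (psub z z') + Rabs (s - s')).
Proof.
  intros Hth Hdl HK Ht Hs Hs'; unfold eff_barrier.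
  pose proof (eff_barrier_core_lipschitz th dl Hth Hdl z z' s s') as Hc.
  pose proof (penalty_lipschitz t K T s s' HK Ht Hs Hs') as Hp.
  assert (0 <= 2 * K * T * nrm (psub z z'))
    by (apply Rmult_le_pos; [apply Rmult_le_pos | apply nrm_ge0]; lra).
  apply Rabs_le_between in Hc, Hp; apply Rabs_le_between; split; nra.
Qed.

(* At a touching point the jet of the barrier would satisfy [|p| <= a], but [|p| >= - h0 > a]. *)
Lemma eff_barrier_no_touch_below u t th dl K T z0 s0 : visc_sol Geff u0 u ->
  0 < th < 1 -> 0 < dl -> 0 <= K -> 0 < s0 < T ->
  (forall y s, 0 <= s <= T -> u z0 s0 - eff_barrier t th dl K z0 s0 <= u y s - eff_barrier t th dl K y s) ->
  False.
Proof.
  intros Hu Hth Hdl HK Hs0 Hmin.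
  pose proof (eff_barrier_subjet t th dl K z0 s0 Hth Hdl HK ltac:(lra)) as Hw; cbv zeta in Hw.
  pose proof (eff_subjet_slope_bound u z0 s0 _ _ _ Hu ltac:(lra)
      (subjet_of_min_sub _ _ _ _ T _ _ _ Hs0 Hmin Hw)).
  set (h0 := dramp dl (nrm z0 - (1 - th) * s0)) in *.
  destruct (dramp_bounds dl Hdl (nrm z0 - (1 - th) * s0)) as [_ Hh0]; fold h0 in Hh0.
  assert (Hslope := eff_barrier_slope_ge th z0 h0 ltac:(lra) Hh0).
  specialize (Hslope ltac:(intros Hz; apply dramp_of_nonpos; rewrite Hz; nra)).
  pose proof (Rmult_le_pos K (ppart (s0 - t)) HK (ppart_ge0 _)); nra.
Qed.

Lemma u_ge_eff_barrier u t th dl : visc_sol Geff u0 u -> 0 < t -> 0 < th < 1 -> 0 < dl ->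
  exists K, forall z s, 0 <= s <= t + 1 -> eff_barrier t th dl K z s <= u z s.
Proof.
  intros Hu Ht Hth Hdl; pose proof Hu as [Huc [Hinit _]].
  set (T := t + 1); assert (HucT := Huc T ltac:(unfold T; lra)).
  destruct (visc_sol_near_initial Geff u T Hu ltac:(unfold T; lra)) as [C [HC0 HC]].
  set (K := C + T + 1); assert (HK : 0 <= K) by (unfold K, T; lra).
  exists K; intros zs ss Hss; apply Rnot_lt_le; intros Hneg.
  set (g z s := eff_barrier t th dl K z s - u z s).
  assert (Hg : forall z s, 0 <= s <= T -> g z s <= C + T - th * nrm z - penalty t K s).
  { intros z s Hs; unfold g, eff_barrier; pose proof (eff_barrier_core_le th dl Hth Hdl z s (proj1 Hs)).
    pose proof (HC z s Hs); lra. }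
  destruct (strip_interior_max g T ((C + T) / th)) as [z0 [s0 [Hs0 [_ Hmax]]]].
  - unfold T; lra.
  - apply unif_cont_on_sub; [|exact HucT].
    apply (lipschitz_unif_cont_on T (2 + 2 * K * T)); [unfold T; nra|].
    intros; apply eff_barrier_lipschitz; auto.
  - exists zs, ss; split; [exact Hss | unfold g; lra].
  - intros z s Hs Hpos; pose proof (Hg z s Hs); pose proof (penalty_ge0 t K s HK).
    apply (Rmult_lt_reg_l th); [lra|]; replace (th * ((C + T) / th)) with (C + T) by (field; lra); lra.
  - intros z; unfold g, eff_barrier; rewrite Hinit, penalty_before by lra.
    pose proof (eff_barrier_core_initial th dl Hth Hdl z); unfold u0; lra.
  - intros z; assert (penalty t K T = K) by apply penalty_horizon.
    pose proof (Hg z T ltac:(unfold T; lra)); pose proof (nrm_ge0 z); unfold K in *; nra.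
  - apply (eff_barrier_no_touch_below u t th dl K T z0 s0 Hu Hth Hdl HK Hs0).
    intros y s Hs; specialize (Hmax y s Hs); unfold g in Hmax; lra.
Qed.

Lemma u_nonneg_on_cone u x t : visc_sol Geff u0 u -> 0 < t -> nrm x = t -> 0 <= u x t.
Proof.
  intros Hu Ht Hx; apply Rnot_lt_le; intros Hneg.
  set (v := - u x t); set (Q := 2 * t + sqrt (1 + t * t)).
  assert (HQ : 0 < Q) by (unfold Q; pose proof (sqrt_pos (1 + t * t)); lra).
  set (th := Rmin (1 / 2) (v / (4 * Q))).
  assert (Hth : 0 < th < 1).
  { split; [apply Rmin_glb_lt; [lra | apply Rdiv_lt_0_compat; unfold v; lra]|].
    pose proof (Rmin_l (1 / 2) (v / (4 * Q))); unfold th; lra. }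
  assert (HthQ : th * Q <= v / 4).
  { apply (Rle_trans _ (v / (4 * Q) * Q)); [apply Rmult_le_compat_r; [lra | apply Rmin_r]|].
    right; field; lra. }
  destruct (u_ge_eff_barrier u t th (v / 4) Hu Ht Hth ltac:(unfold v; lra)) as [K HK].
  specialize (HK x t ltac:(lra)); unfold eff_barrier in HK; rewrite penalty_before in HK by lra.
  pose proof (eff_barrier_core_on_cone th (v / 4) Hth ltac:(unfold v; lra) x t ltac:(lra) Hx).
  unfold Q, v in *; lra.
Qed.

(** * The radial profile *)

Lemma ln_le_sub1 x : 0 < x -> ln x <= x - 1.
Proof. intros Hx; pose proof (exp_ineq1_le (ln x)) as Hexp; rewrite exp_ln in Hexp by exact Hx; lra. Qed.

Lemma ln_le_half x : 0 < x -> ln x <= x / 2.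
Proof.
  intros Hx; replace x with (x / 2 * 2) at 1 by field; rewrite ln_mult by lra.
  pose proof (ln_le_sub1 (x / 2) ltac:(lra)).
  assert (ln 2 < 1)
    by (rewrite <- (ln_exp 1); apply ln_increasing; [lra|]; pose proof (exp_ineq1 1 ltac:(lra)); lra).
  lra.
Qed.

Lemma ln_lipschitz a b m : 0 < m -> m <= a -> m <= b -> Rabs (ln a - ln b) <= Rabs (a - b) / m.
Proof.
  intros Hm.
  assert (Hle : forall a b, m <= a -> m <= b -> b <= a -> ln a - ln b <= (a - b) / m).
  { intros a' b' Ha' Hb' Hab; replace (ln a' - ln b') with (ln (a' / b'))
      by (unfold Rdiv; rewrite ln_mult, ln_Rinv by (try apply Rinv_0_lt_compat; lra); ring).
    pose proof (ln_le_sub1 (a' / b') ltac:(apply Rdiv_lt_0_compat; lra)) as Hln.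
    replace (a' / b' - 1) with ((a' - b') / b') in Hln by (field; lra).
    enough ((a' - b') / b' <= (a' - b') / m) by lra.
    apply Rmult_le_compat_l; [lra|]; apply Rinv_le_contravar; lra. }
  intros Ha Hb; destruct (Rle_dec b a).
  - pose proof (Hle a b Ha Hb r) as Hab; assert (ln b <= ln a) by (apply ln_le; lra).
    rewrite !Rabs_right by lra; exact Hab.
  - pose proof (Hle b a Hb Ha ltac:(lra)); assert (ln a <= ln b) by (apply ln_le; lra).
    rewrite !Rabs_left1 by lra; unfold Rdiv in *; lra.
Qed.

(* For [r > E], [(x, t) |-> psi E |x| + t / 2] is an exact solution of the [E]-problem:
   [psi' = - r / (2 (r - E))], so the curvature term [- E psi' / r = E / (2 (r - E))] and the
   gradient term [|psi'|] differ by exactly [1 / 2]. *)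
Definition psi (E r : R) : R := - / 2 * (r + E * ln (r / E - 1)).

Section Psi.

Variable E : R.
Hypothesis HE : 0 < E.

Let ratio_pos r : E < r -> 0 < r / E - 1.
Proof.
  intros Hr; apply (Rmult_lt_reg_r E); [lra|].
  unfold Rdiv; rewrite Rmult_minus_distr_r, Rmult_assoc, Rinv_l by lra; lra.
Qed.

Lemma psi_ge r : E < r -> - (3 / 4) * r <= psi E r.
Proof.
  intros Hr; unfold psi; pose proof (ln_le_half _ (ratio_pos r Hr)).
  assert (Hln : E * ln (r / E - 1) <= E * ((r / E - 1) / 2)) by (apply Rmult_le_compat_l; lra).
  replace (E * ((r / E - 1) / 2)) with ((r - E) / 2) in Hln by (field; lra); lra.
Qed.

Lemma psi_initial r : E < r -> - r + E / 2 <= psi E r - / 2 * E.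
Proof.
  intros Hr; unfold psi; pose proof (ln_le_sub1 _ (ratio_pos r Hr)).
  assert (Hln : E * ln (r / E - 1) <= E * (r / E - 1 - 1)) by (apply Rmult_le_compat_l; lra).
  replace (E * (r / E - 1 - 1)) with (r - 2 * E) in Hln by (field; lra); lra.
Qed.

Lemma psi_antitone r r' : E < r -> r <= r' -> psi E r' <= psi E r.
Proof.
  intros Hr Hrr'; unfold psi.
  assert (r / E <= r' / E) by (apply Rmult_le_compat_r; [left; apply Rinv_0_lt_compat|]; lra).
  assert (ln (r / E - 1) <= ln (r' / E - 1)) by (apply ln_le; [apply ratio_pos|]; lra).
  assert (E * ln (r / E - 1) <= E * ln (r' / E - 1)) by (apply Rmult_le_compat_l; lra); lra.
Qed.

Lemma psi_lipschitz r r' m : 0 < m -> m <= r / E - 1 -> m <= r' / E - 1 ->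
  Rabs (psi E r - psi E r') <= / 2 * (1 + / m) * Rabs (r - r').
Proof.
  intros Hm Hr Hr'; unfold psi.
  pose proof (ln_lipschitz _ _ m Hm Hr Hr') as Hln.
  replace (r / E - 1 - (r' / E - 1)) with ((r - r') * / E) in Hln by (field; lra).
  rewrite Rabs_mult, (Rabs_right (/ E)) in Hln by (left; apply Rinv_0_lt_compat; lra).
  replace (- / 2 * (r + E * ln (r / E - 1)) - - / 2 * (r' + E * ln (r' / E - 1)))
    with (- / 2 * ((r - r') + E * (ln (r / E - 1) - ln (r' / E - 1)))) by ring.
  rewrite Rabs_mult, Rabs_Ropp, (Rabs_right (/ 2)) by lra.
  eapply Rle_trans; [apply Rmult_le_compat_l; [lra | apply Rabs_triang]|].
  rewrite Rabs_mult, (Rabs_right E) by lra.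
  assert (E * Rabs (ln (r / E - 1) - ln (r' / E - 1)) <= / m * Rabs (r - r')).
  { apply (Rle_trans _ (E * (Rabs (r - r') * / E / m))); [apply Rmult_le_compat_l; lra|].
    right; field; lra. }
  lra.
Qed.

Lemma psi_large_near_E M : exists r1, E < r1 < 2 * E /\ M <= psi E r1.
Proof.
  set (m := exp (- (2 * Rabs M / E + 2))).
  assert (Hm : 0 < m < 1).
  { split; [apply exp_pos|]; rewrite <- exp_0; apply exp_increasing.
    pose proof (Rabs_pos M); assert (0 <= 2 * Rabs M / E)
      by (apply Rmult_le_pos; [lra | left; apply Rinv_0_lt_compat; lra]); lra. }
  exists (E * (1 + m)); split; [nra|].
  unfold psi; replace (E * (1 + m) / E - 1) with m by (field; lra); unfold m; rewrite ln_exp.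
  replace (- / 2 * (E * (1 + exp (- (2 * Rabs M / E + 2))) + E * - (2 * Rabs M / E + 2)))
    with (Rabs M + E - E * (1 + exp (- (2 * Rabs M / E + 2))) / 2) by (field; lra).
  fold m; pose proof (Rle_abs M); nra.
Qed.

End Psi.

Lemma MVT_on_interval f df a b x y : (forall c, a <= c <= b -> is_derive f c (df c)) ->
  a <= x <= b -> a <= y <= b ->
  exists c, Rmin x y <= c <= Rmax x y /\ f y - f x = df c * (y - x).
Proof.
  intros Hf Hx Hy.
  assert (Hin : forall c, Rmin x y <= c <= Rmax x y -> a <= c <= b)
    by (intros c Hc; unfold Rmin, Rmax in *; destruct Rle_dec; lra).
  destruct (MVT_gen f x y df) as [c [Hc Hfc]].
  - intros c Hc; apply Hf, Hin; lra.
  - intros c Hc; apply continuity_pt_filterlim, (ex_derive_continuous (V := R_NormedModule)).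
    eexists; apply Hf, Hin, Hc.
  - exists c; split; assumption.
Qed.

Lemma taylor_le_of_second_derivative_le (g g1 g2 : R -> R) a b M x y :
  (forall c, a <= c <= b -> is_derive g c (g1 c)) ->
  (forall c, a <= c <= b -> is_derive g1 c (g2 c)) ->
  (forall c, a <= c <= b -> g2 c <= M) -> a <= x <= b -> a <= y <= b ->
  g y <= g x + g1 x * (y - x) + M / 2 * (y - x) ^ 2.
Proof.
  intros Hg Hg1 HM Hx Hy.
  set (k c := g c - (g x + g1 x * (c - x) + M / 2 * (c - x) ^ 2)).
  set (dk c := g1 c - (g1 x + M * (c - x))).
  assert (Hk : forall c, a <= c <= b -> is_derive k c (dk c)).
  { intros c Hc; apply (is_derive_minus _ _ c _ _ (Hg c Hc)); auto_derive; auto; field. }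
  destruct (MVT_on_interval k dk a b x y Hk Hx Hy) as [c [Hc Hkc]].
  assert (Hca : a <= c <= b) by (unfold Rmin, Rmax in *; destruct Rle_dec; lra).
  destruct (MVT_on_interval g1 g2 a b x c Hg1 Hx Hca) as [c' [Hc' Hg1c]].
  assert (Hc'a : a <= c' <= b) by (unfold Rmin, Rmax in *; repeat destruct Rle_dec; lra).
  assert (Hdk : dk c = (g2 c' - M) * (c - x)) by (unfold dk; lra).
  assert (0 <= (c - x) * (y - x)) by (unfold Rmin, Rmax in *; destruct Rle_dec; nra).
  specialize (HM c' Hc'a).
  enough (k y <= 0) by (unfold k in *; lra).
  replace (k y) with (k y - k x) by (unfold k; ring); rewrite Hkc, Hdk; nra.
Qed.

Lemma taylor_le_local (g g1 g2 : R -> R) x0 r k : 0 < r -> 0 < k ->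
  (forall c, Rabs (c - x0) < r -> is_derive g c (g1 c) /\ is_derive g1 c (g2 c)) ->
  continuity_pt g2 x0 ->
  exists d, 0 < d /\ forall x, Rabs (x - x0) <= d ->
    g x <= g x0 + g1 x0 * (x - x0) + (g2 x0 + k) / 2 * (x - x0) ^ 2.
Proof.
  intros Hr Hk Hder Hcont.
  destruct (Hcont k Hk) as [al [Hal Hal']]; simpl in Hal'; unfold R_dist in Hal'.
  set (d := Rmin r al / 2).
  assert (Hd : 0 < d /\ d < r /\ d < al)
    by (pose proof (Rmin_l r al); pose proof (Rmin_r r al); pose proof (Rmin_glb_lt r al 0 Hr Hal);
        unfold d; lra).
  exists d; split; [lra|]; intros x Hx; apply Rabs_le_between' in Hx.
  assert (Hin : forall c, x0 - d <= c <= x0 + d -> Rabs (c - x0) < r /\ Rabs (c - x0) < al)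
    by (intros c Hc; split; apply Rabs_lt_between'; lra).
  apply (taylor_le_of_second_derivative_le g g1 g2 (x0 - d) (x0 + d)); try lra.
  - intros c Hc; apply Hder, Hin, Hc.
  - intros c Hc; apply Hder, Hin, Hc.
  - intros c Hc; destruct (Req_dec c x0) as [->|Hne]; [lra|].
    assert (Hg2 : Rabs (g2 c - g2 x0) < k) by (apply Hal'; split; [split; [exact I | auto] | apply Hin, Hc]).
    apply Rabs_lt_between in Hg2; lra.
Qed.

Definition psi_sq (E rho : R) : R := psi E (sqrt rho).
Definition dpsi_sq (E rho : R) : R := - / 4 / (sqrt rho - E).
Definition d2psi_sq (E rho : R) : R := / 8 / (sqrt rho * ((sqrt rho - E) * (sqrt rho - E))).

Section PsiSquared.

Variable E : R.
Hypothesis HE : 0 < E.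

Let sqrt_gt rho : E * E < rho -> E < sqrt rho.
Proof. intros; rewrite <- (sqrt_square E) by lra; apply sqrt_lt_1_alt; nra. Qed.

Lemma psi_sq_derive rho : E * E < rho -> is_derive (psi_sq E) rho (dpsi_sq E rho).
Proof.
  intros Hr; pose proof (sqrt_gt rho Hr); unfold psi_sq, psi, dpsi_sq.
  assert (1 < sqrt rho * / E)
    by (apply (Rmult_lt_reg_r E); [lra|]; rewrite Rmult_assoc, Rinv_l by lra; lra).
  auto_derive.
  - repeat split; nra.
  - replace (sqrt rho * / E + - (1)) with ((sqrt rho - E) / E) by (field; lra).
    field; repeat split; lra.
Qed.

Lemma dpsi_sq_derive rho : E * E < rho -> is_derive (dpsi_sq E) rho (d2psi_sq E rho).
Proof.
  intros Hr; pose proof (sqrt_gt rho Hr); unfold dpsi_sq, d2psi_sq.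
  auto_derive; [repeat split; nra | field; lra].
Qed.

Lemma d2psi_sq_continuous rho : E * E < rho -> continuity_pt (d2psi_sq E) rho.
Proof.
  intros Hr; pose proof (sqrt_gt rho Hr).
  apply continuity_pt_filterlim, (ex_derive_continuous (V := R_NormedModule)); unfold d2psi_sq.
  assert (0 < sqrt rho * ((sqrt rho - E) * (sqrt rho - E))) by (apply Rmult_lt_0_compat; nra).
  auto_derive; repeat split; nra.
Qed.

Lemma d2psi_sq_pos rho : E * E < rho -> 0 < d2psi_sq E rho.
Proof.
  intros Hr; pose proof (sqrt_gt rho Hr); unfold d2psi_sq.
  apply Rdiv_lt_0_compat; [lra|]; apply Rmult_lt_0_compat; nra.
Qed.

Lemma psi_sq_le_local rho0 k : E * E < rho0 -> 0 < k ->
  exists d, 0 < d /\ forall rho, Rabs (rho - rho0) <= d ->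
    psi_sq E rho <= psi_sq E rho0 + dpsi_sq E rho0 * (rho - rho0)
                    + (d2psi_sq E rho0 + k) / 2 * (rho - rho0) ^ 2.
Proof.
  intros Hr0 Hk; apply (taylor_le_local _ _ _ rho0 (rho0 - E * E)); try lra.
  - intros c Hc; apply Rabs_lt_between' in Hc.
    split; [apply psi_sq_derive | apply dpsi_sq_derive]; lra.
  - now apply d2psi_sq_continuous.
Qed.

End PsiSquared.

(* The Hessian of [y |-> psi E |y| = psi_sq E |y|^2] at [z0], namely
   [2 psi_sq' I + 4 psi_sq'' z0 (x) z0], enlarged by [kap I]. *)
Definition psi_hessian (E : R) (z0 : pt) (kap : R) : sym2 :=
  let f1 := dpsi_sq E (dot z0 z0) in let f2 := d2psi_sq E (dot z0 z0) in
  Sym2 (2 * f1 + 4 * f2 * fst z0 * fst z0 + kap) (4 * f2 * fst z0 * snd z0)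
       (2 * f1 + 4 * f2 * snd z0 * snd z0 + kap).

Lemma psi_hessian_quad E z0 kap h : / 2 * dot (mxv (psi_hessian E z0 kap) h) h =
  / 2 * ((2 * dpsi_sq E (dot z0 z0) + kap) * dot h h + 4 * d2psi_sq E (dot z0 z0) * (dot z0 h * dot z0 h)).
Proof. destruct z0, h; unfold psi_hessian, mxv, dot; simpl; ring. Qed.

Lemma second_order_remainder_le r0 n zh f2 kap :
  0 <= r0 -> 0 <= n <= 1 -> Rabs zh <= r0 * n -> 0 < f2 -> 0 < kap ->
  n <= kap / (2 * f2 * (4 * r0 + 1)) ->
  f2 * (4 * zh * (n * n) + n * n * (n * n))
  + kap / (2 * ((2 * r0 + 1) * (2 * r0 + 1))) * (2 * zh + n * n) ^ 2 <= kap * (n * n).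
Proof.
  intros Hr0 Hn Hzh Hf2 Hkap Hsmall; set (c := 2 * r0 + 1).
  apply Rabs_le_between in Hzh.
  assert (Hnn : 0 <= n * n) by nra.
  assert (n * n <= n * 1) by (apply Rmult_le_compat_l; lra).
  assert (Hquad : kap / (2 * (c * c)) * (2 * zh + n * n) ^ 2 <= kap / 2 * (n * n)).
  { apply (Rle_trans _ (kap / (2 * (c * c)) * (c * n) ^ 2)).
    - apply Rmult_le_compat_l; [apply Rmult_le_pos; [lra | left; apply Rinv_0_lt_compat; unfold c; nra]|].
      rewrite <- (pow2_abs (2 * zh + n * n)); apply pow_incr; split; [apply Rabs_pos|].
      apply Rabs_le; unfold c; nra.
    - right; field; unfold c; lra. }
  assert (Hcubic : 4 * zh * (n * n) + n * n * (n * n)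
                   <= (4 * r0 + 1) * (kap / (2 * f2 * (4 * r0 + 1))) * (n * n)).
  { assert (4 * zh * (n * n) <= 4 * (r0 * n) * (n * n)) by (apply Rmult_le_compat_r; lra).
    assert (n * n * (n * n) <= n * (n * n)) by (apply Rmult_le_compat_r; lra).
    assert ((4 * r0 + 1) * n * (n * n) <= (4 * r0 + 1) * (kap / (2 * f2 * (4 * r0 + 1))) * (n * n))
      by (apply Rmult_le_compat_r; [lra | apply Rmult_le_compat_l; lra]).
    lra. }
  apply (Rmult_le_compat_l f2) in Hcubic; [|lra].
  replace (f2 * ((4 * r0 + 1) * (kap / (2 * f2 * (4 * r0 + 1))) * (n * n))) with (kap / 2 * (n * n))
    in Hcubic by (field; lra).
  lra.
Qed.

Lemma psi_nrm_le_quadratic E z0 kap : 0 < E -> E < nrm z0 -> 0 < kap ->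
  exists d, 0 < d /\ forall y, nrm (psub y z0) < d ->
    psi E (nrm y) <= psi E (nrm z0) + dot (pscale (2 * dpsi_sq E (dot z0 z0)) z0) (psub y z0)
                     + / 2 * dot (mxv (psi_hessian E z0 kap) (psub y z0)) (psub y z0).
Proof.
  intros HE Hz0 Hkap.
  set (r0 := nrm z0) in *; set (rho0 := dot z0 z0); set (c := 2 * r0 + 1).
  assert (Hr0 : r0 * r0 = rho0) by apply nrm_sqr.
  assert (Hr0pos : 0 <= r0) by apply nrm_ge0.
  set (f1 := dpsi_sq E rho0); set (f2 := d2psi_sq E rho0).
  assert (Hf2 : 0 < f2) by (apply d2psi_sq_pos; [exact HE | nra]).
  destruct (psi_sq_le_local E HE rho0 (kap / (2 * (c * c))) ltac:(nra)
    ltac:(apply Rdiv_lt_0_compat; unfold c; nra)) as [d [Hd Htay]].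
  set (e3 := kap / (2 * f2 * (4 * r0 + 1))).
  assert (He3 : 0 < e3) by (unfold e3; apply Rdiv_lt_0_compat; nra).
  exists (Rmin 1 (Rmin (d / c) e3)); split;
    [repeat apply Rmin_glb_lt; try lra; apply Rdiv_lt_0_compat; unfold c; lra|].
  intros y Hy; pose proof (Rmin_l 1 (Rmin (d / c) e3)); pose proof (Rmin_r 1 (Rmin (d / c) e3));
    pose proof (Rmin_l (d / c) e3); pose proof (Rmin_r (d / c) e3).
  set (n := nrm (psub y z0)) in *; set (zh := dot z0 (psub y z0)).
  assert (Hn : 0 <= n <= 1) by (split; [apply nrm_ge0 | lra]).
  assert (Hcn : c * n <= d).
  { assert (Hnd : n <= d / c) by lra; apply (Rmult_le_compat_l c) in Hnd; [|unfold c; lra].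
    replace (c * (d / c)) with d in Hnd by (field; unfold c; lra); lra. }
  assert (Hhh : dot (psub y z0) (psub y z0) = n * n) by (symmetry; apply nrm_sqr).
  assert (Hzh : Rabs zh <= r0 * n) by apply dot_Cauchy_Schwarz.
  assert (Hyy : dot y y - rho0 = 2 * zh + n * n)
    by (unfold zh, rho0; rewrite (dot_psub_expand y z0), Hhh; ring).
  specialize (Htay (dot y y)
      ltac:(rewrite Hyy; apply Rabs_le_between in Hzh; apply Rabs_le; unfold c in Hcn; nra)).
  unfold psi_sq in Htay; fold (nrm y) r0 f1 f2 in Htay; change (sqrt rho0) with r0 in Htay;
    rewrite Hyy in Htay.
  rewrite dot_pscale_l, psi_hessian_quad, Hhh; fold rho0 f1 f2 zh.
  pose proof (second_order_remainder_le r0 n zh f2 kap Hr0pos Hn Hzh Hf2 Hkap ltac:(fold e3; lra)) as Hrem.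
  fold c in Hrem; nra.
Qed.

(** * The eps-problem *)

(* One coordinate of [q / |q| - p / |p| = (q - p) / |p| + (q / |q|) (|p| - |q|) / |p|]. *)
Lemma normalized_coord_diff qi pi nq np D : 0 < nq -> 0 < np -> Rabs (/ nq * qi) <= 1 ->
  Rabs (qi - pi) <= D -> Rabs (np - nq) <= D -> Rabs (/ nq * qi - / np * pi) <= 2 * D / np.
Proof.
  intros Hq Hp H1 H2 H3.
  replace (/ nq * qi - / np * pi) with ((qi - pi) / np + (/ nq * qi) * ((np - nq) / np)) by (field; lra).
  eapply Rle_trans; [apply Rabs_triang|].
  pose proof (Rabs_div_pos_le _ _ _ Hp H2).
  pose proof (Rabs_mult_le _ _ _ _ H1 (Rabs_div_pos_le _ _ _ Hp H3)).
  replace (2 * D / np) with (D / np + 1 * (D / np)) by (field; lra); lra.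
Qed.

Lemma hat_coord_diff q p : q <> (0, 0) -> p <> (0, 0) ->
  Rabs (fst (hat q) - fst (hat p)) <= 2 * nrm (psub q p) / nrm p /\
  Rabs (snd (hat q) - snd (hat p)) <= 2 * nrm (psub q p) / nrm p.
Proof.
  intros Hq Hp; pose proof (nrm_gt0 q Hq); pose proof (nrm_gt0 p Hp).
  pose proof (Rabs_fst_le_nrm (hat q)); pose proof (Rabs_snd_le_nrm (hat q));
    rewrite nrm_hat in * by exact Hq.
  pose proof (Rabs_fst_le_nrm (psub q p)); pose proof (Rabs_snd_le_nrm (psub q p)).
  pose proof (nrm_lipschitz p q) as Hlip; rewrite nrm_psub_sym in Hlip.
  unfold hat, pscale in *; destruct q, p; simpl in *.
  split; apply normalized_coord_diff; assumption.
Qed.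

Lemma hat_coord_le q : q <> (0, 0) -> Rabs (fst (hat q)) <= 1 /\ Rabs (snd (hat q)) <= 1.
Proof. intros Hq; rewrite <- (nrm_hat q Hq); split; [apply Rabs_fst_le_nrm | apply Rabs_snd_le_nrm]. Qed.

Definition sym_abs_sum (Z : sym2) : R := Rabs (s11 Z) + 2 * Rabs (s12 Z) + Rabs (s22 Z).

Lemma trprod_comm A Z : trprod A Z = trprod Z A.
Proof. unfold trprod; ring. Qed.

Lemma trprod_diff_le A B Z e :
  Rabs (s11 A - s11 B) <= e -> Rabs (s12 A - s12 B) <= e -> Rabs (s22 A - s22 B) <= e ->
  Rabs (trprod A Z - trprod B Z) <= e * sym_abs_sum Z.
Proof.
  intros H11 H12 H22; unfold sym_abs_sum.
  replace (trprod A Z - trprod B Z) with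
    ((s11 A - s11 B) * s11 Z + (2 * ((s12 A - s12 B) * s12 Z) + (s22 A - s22 B) * s22 Z))
    by (unfold trprod; ring).
  pose proof (Rabs_mult_le _ _ _ _ H11 (Rle_refl (Rabs (s11 Z)))).
  pose proof (Rabs_mult_le _ _ _ _ H12 (Rle_refl (Rabs (s12 Z)))).
  pose proof (Rabs_mult_le _ _ _ _ H22 (Rle_refl (Rabs (s22 Z)))).
  eapply Rle_trans; [apply Rabs_triang|]; eapply Rle_trans; [apply Rplus_le_compat_l, Rabs_triang|].
  rewrite (Rabs_mult 2), (Rabs_right 2) by lra; lra.
Qed.

Lemma Rabs_mult_diff_le a b c d e : Rabs a <= 1 -> Rabs d <= 1 -> Rabs (a - c) <= e -> Rabs (b - d) <= e ->
  Rabs (a * b - c * d) <= 2 * e.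
Proof.
  intros Ha Hd Hac Hbd; replace (a * b - c * d) with (a * (b - d) + d * (a - c)) by ring.
  eapply Rle_trans; [apply Rabs_triang|].
  pose proof (Rabs_mult_le _ _ _ _ Ha Hbd); pose proof (Rabs_mult_le _ _ _ _ Hd Hac); lra.
Qed.

Lemma projm_coef_le q : q <> (0, 0) ->
  Rabs (s11 (projm q)) <= 1 /\ Rabs (s12 (projm q)) <= 1 /\ Rabs (s22 (projm q)) <= 1.
Proof.
  intros Hq; destruct (hat_coord_le q Hq) as [H1 H2]; unfold projm; cbn [s11 s12 s22].
  rewrite Rabs_Ropp; pose proof (Rabs_mult_le _ _ _ _ H1 H2).
  rewrite <- (Rabs_right 1) in H1, H2 by lra; apply Rsqr_le_abs_1 in H1, H2; unfold Rsqr in *.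
  assert (0 <= fst (hat q) * fst (hat q)) by nra; assert (0 <= snd (hat q) * snd (hat q)) by nra.
  split; [|split]; try lra; apply Rabs_le; lra.
Qed.

Lemma projm_coef_diff q p : q <> (0, 0) -> p <> (0, 0) ->
  let e := 4 * nrm (psub q p) / nrm p in
  Rabs (s11 (projm q) - s11 (projm p)) <= e /\ Rabs (s12 (projm q) - s12 (projm p)) <= e /\
  Rabs (s22 (projm q) - s22 (projm p)) <= e.
Proof.
  intros Hq Hp e; destruct (hat_coord_diff q p Hq Hp) as [H1 H2].
  destruct (hat_coord_le q Hq) as [Hq1 Hq2], (hat_coord_le p Hp) as [Hp1 Hp2].
  replace e with (2 * (2 * nrm (psub q p) / nrm p)) by (unfold e; field; apply Rgt_not_eq, nrm_gt0, Hp).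
  unfold projm; cbn [s11 s12 s22].
  replace (1 - fst (hat q) * fst (hat q) - (1 - fst (hat p) * fst (hat p)))
    with (- (fst (hat q) * fst (hat q) - fst (hat p) * fst (hat p))) by ring.
  replace (- (fst (hat q) * snd (hat q)) - - (fst (hat p) * snd (hat p)))
    with (- (fst (hat q) * snd (hat q) - fst (hat p) * snd (hat p))) by ring.
  replace (1 - snd (hat q) * snd (hat q) - (1 - snd (hat p) * snd (hat p)))
    with (- (snd (hat q) * snd (hat q) - snd (hat p) * snd (hat p))) by ring.
  rewrite !Rabs_Ropp; split; [|split]; apply Rabs_mult_diff_le; assumption.
Qed.

Lemma Geps_continuous_at E x X p : 0 < E -> p <> (0, 0) ->
  forall ep, 0 < ep -> exists dd, 0 < dd /\ forall Y q, q <> (0, 0) ->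
    sym_dist Y X + nrm (psub q p) < dd -> Geps E x X p - ep <= Geps E x Y q.
Proof.
  intros HE Hp ep Hep.
  set (np := nrm p); assert (Hnp : 0 < np) by (apply nrm_gt0; auto).
  set (Cx := sym_abs_sum (sscale E X)).
  assert (HCx : 0 <= Cx) by (unfold Cx, sym_abs_sum; pose proof (Rabs_pos (s11 (sscale E X)));
    pose proof (Rabs_pos (s12 (sscale E X))); pose proof (Rabs_pos (s22 (sscale E X))); lra).
  set (L := 4 * E + 4 * Cx / np + 1).
  assert (HCxnp : 0 <= 4 * Cx / np) by (apply Rmult_le_pos; [lra | left; apply Rinv_0_lt_compat; lra]).
  assert (HL : 0 < L) by (unfold L; lra).
  exists (ep / L); split; [apply Rdiv_lt_0_compat; lra|]; intros Y q Hq Hd.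
  set (D := nrm (psub q p)) in *; set (sd := sym_dist Y X) in *.
  assert (HD : 0 <= D) by apply nrm_ge0; assert (Hsd : 0 <= sd) by apply sym_dist_ge0.
  assert (HY : Rabs (trprod (projm q) (sscale E Y) - trprod (projm q) (sscale E X)) <= 4 * E * sd).
  { rewrite !(trprod_comm (projm q)).
    eapply Rle_trans; [apply (trprod_diff_le _ _ _ (E * sd))|].
    1-3: unfold sscale, sd, sym_dist; simpl; rewrite <- Rmult_minus_distr_l, Rabs_mult, (Rabs_right E) by lra;
         apply Rmult_le_compat_l; [lra|]; pose proof (Rabs_pos (s11 Y - s11 X));
         pose proof (Rabs_pos (s12 Y - s12 X)); pose proof (Rabs_pos (s22 Y - s22 X)); lra.
    destruct (projm_coef_le q Hq) as [H1 [H2 H3]]; unfold sym_abs_sum.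
    replace (4 * E * sd) with (E * sd * 4) by ring; apply Rmult_le_compat_l; [nra | lra]. }
  assert (Hproj : Rabs (trprod (projm q) (sscale E X) - trprod (projm p) (sscale E X)) <= 4 * D / np * Cx).
  { destruct (projm_coef_diff q p Hq Hp) as [H1 [H2 H3]]; now apply trprod_diff_le. }
  pose proof (nrm_lipschitz q p) as Hn; fold D np in Hn.
  apply Rabs_le_between in HY, Hproj, Hn.
  assert (L * (sd + D) < ep)
    by (apply (Rmult_lt_compat_l L) in Hd; [|lra]; replace (L * (ep / L)) with ep in Hd by (field; lra); lra).
  assert (4 * D / np * Cx = 4 * Cx / np * D) by (field; lra).
  assert (0 <= 4 * Cx / np * sd) by (apply Rmult_le_pos; lra).
  unfold Geps, F, c; fold np; unfold L in *; nra.
Qed.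

Lemma eps_superjet_bound E ue z0 s0 a p X : 0 < E -> visc_sol (Geps E) u0 ue -> 0 < s0 -> p <> (0, 0) ->
  superjet ue z0 s0 a p X -> Geps E z0 X p <= - a.
Proof.
  intros HE [_ [_ Hjet]] Hs0 Hp Hsup.
  apply lower_env_le_of_continuity;
    [now apply Geps_continuous_at | exact (proj1 (Hjet z0 s0 Hs0) a p X Hsup)].
Qed.

(* Tangential projection of the Hessian [2 f1 I + 4 f2 z0 (x) z0 + k I]: the radial part drops out. *)
Lemma trace_tangential_hessian a0 b0 r0 f1 f2 k : 0 < r0 -> r0 * r0 = a0 * a0 + b0 * b0 ->
  (1 - (- a0 / r0) * (- a0 / r0)) * (2 * f1 + 4 * f2 * a0 * a0 + k)
  + 2 * (- ((- a0 / r0) * (- b0 / r0))) * (4 * f2 * a0 * b0)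
  + (1 - (- b0 / r0) * (- b0 / r0)) * (2 * f1 + 4 * f2 * b0 * b0 + k) = 2 * f1 + k.
Proof.
  intros Hr Hs.
  replace (1 - (- a0 / r0) * (- a0 / r0)) with ((r0 * r0 - a0 * a0) / (r0 * r0)) by (field; lra).
  replace (1 - (- b0 / r0) * (- b0 / r0)) with ((r0 * r0 - b0 * b0) / (r0 * r0)) by (field; lra).
  replace (r0 * r0 - a0 * a0) with (b0 * b0) by lra; replace (r0 * r0 - b0 * b0) with (a0 * a0) by lra.
  transitivity ((a0 * a0 + b0 * b0) * (2 * f1 + k) / (r0 * r0)); [field; lra | rewrite <- Hs; field; lra].
Qed.

Lemma dpsi_sq_neg E z0 : E < nrm z0 -> dpsi_sq E (dot z0 z0) < 0.
Proof.
  intros Hz; unfold dpsi_sq; fold (nrm z0).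
  pose proof (Rinv_0_lt_compat (nrm z0 - E) ltac:(lra)); unfold Rdiv; nra.
Qed.

Lemma Geps_at_psi_jet E z0 kap x : 0 < E -> E < nrm z0 ->
  Geps E x (psi_hessian E z0 kap) (pscale (2 * dpsi_sq E (dot z0 z0)) z0) = - / 2 - E * kap.
Proof.
  intros HE Hz; pose proof (dpsi_sq_neg E z0 Hz) as Hneg.
  assert (Hf : dpsi_sq E (dot z0 z0) = - / 4 / (nrm z0 - E)) by reflexivity.
  set (r0 := nrm z0) in *; set (f1 := dpsi_sq E (dot z0 z0)) in *; set (f2 := d2psi_sq E (dot z0 z0)).
  assert (Hnp : nrm (pscale (2 * f1) z0) = - (2 * f1) * r0)
    by (rewrite nrm_pscale, Rabs_left; [reflexivity | lra]).
  assert (Hr0 : r0 * r0 = fst z0 * fst z0 + snd z0 * snd z0) by apply nrm_sqr.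
  unfold Geps, F, c, projm, hat; cbv zeta; rewrite Hnp.
  unfold pscale, psi_hessian, trprod, sscale; simpl; fold f1 f2.
  replace (/ (- (2 * f1) * r0) * (2 * f1 * fst z0)) with (- fst z0 / r0) by (field; split; lra).
  replace (/ (- (2 * f1) * r0) * (2 * f1 * snd z0)) with (- snd z0 / r0) by (field; split; lra).
  pose proof (trace_tangential_hessian (fst z0) (snd z0) r0 f1 f2 kap ltac:(lra) Hr0) as Ht.
  transitivity (- (E * (2 * f1 + kap)) - 1 * (- (2 * f1) * r0));
    [rewrite <- Ht; ring | rewrite Hf; field; lra].
Qed.

(* Capping [|z|] below by [r1 > E] keeps [psi] away from its singularity at [r = E]. *)
Definition eps_barrier (E t lam K r1 : R) (z : pt) (s : R) : R :=
  psi E (Rmax (nrm z) r1) + / 2 * s - / 2 * E + lam * s + penalty t K s.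

Section EpsBarrier.

Variables E t lam K r1 : R.
Hypothesis HE : 0 < E.
Hypothesis Hr1 : E < r1.
Hypothesis Hlam : 0 < lam.
Hypothesis HK : 0 < K.

Let time_part_ge0 s : 0 <= s -> 0 <= / 2 * s + lam * s + penalty t K s.
Proof. intros Hs; pose proof (penalty_ge0 t K s ltac:(lra)); nra. Qed.

Lemma eps_barrier_ge_near z s : 0 <= s -> nrm z <= r1 -> psi E r1 - / 2 * E <= eps_barrier E t lam K r1 z s.
Proof. intros Hs Hz; unfold eps_barrier; rewrite Rmax_right by lra; pose proof (time_part_ge0 s Hs); lra. Qed.

Lemma eps_barrier_ge_far z s : 0 <= s -> r1 <= nrm z ->
  - (3 / 4) * nrm z - / 2 * E + penalty t K s <= eps_barrier E t lam K r1 z s.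
Proof.
  intros Hs Hz; unfold eps_barrier; rewrite Rmax_left by lra.
  pose proof (psi_ge E HE (nrm z) ltac:(lra)); nra.
Qed.

Lemma eps_barrier_initial z : 0 < t -> r1 <= nrm z -> u0 z + / 2 * E <= eps_barrier E t lam K r1 z 0.
Proof.
  intros Ht Hz; unfold eps_barrier, u0; rewrite Rmax_left, penalty_before by lra.
  pose proof (psi_initial E HE (nrm z) ltac:(lra)); lra.
Qed.

Lemma eps_barrier_le_psi z s : E < nrm z ->
  eps_barrier E t lam K r1 z s <= psi E (nrm z) + / 2 * s - / 2 * E + lam * s + penalty t K s.
Proof.
  intros Hz; unfold eps_barrier; destruct (Rle_dec (nrm z) r1).
  - rewrite Rmax_right by lra; pose proof (psi_antitone E HE (nrm z) r1 Hz r); lra.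
  - rewrite Rmax_left by lra; lra.
Qed.

Lemma eps_barrier_lipschitz T z z' s s' : 0 < t -> 0 <= s <= T -> 0 <= s' <= T ->
  Rabs (eps_barrier E t lam K r1 z s - eps_barrier E t lam K r1 z' s')
  <= (/ 2 * (1 + / (r1 / E - 1)) + / 2 + lam + 2 * K * T) * (nrm (psub z z') + Rabs (s - s')).
Proof.
  intros Ht Hs Hs'; unfold eps_barrier.
  set (m := r1 / E - 1); set (Lf := / 2 * (1 + / m)).
  assert (Hm : 0 < m)
    by (unfold m; replace (r1 / E - 1) with ((r1 - E) / E) by (field; lra); apply Rdiv_lt_0_compat; lra).
  assert (HLf : 0 < Lf) by (unfold Lf; pose proof (Rinv_0_lt_compat m Hm); lra).
  assert (Hcap : forall w, m <= Rmax w r1 / E - 1).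
  { intros w;
    apply Rplus_le_compat_r, Rmult_le_compat_r; [left; apply Rinv_0_lt_compat; lra | apply Rmax_r]. }
  pose proof (psi_lipschitz E HE _ _ m Hm (Hcap (nrm z)) (Hcap (nrm z'))) as Hpsi; fold Lf in Hpsi.
  assert (Hmax : Rabs (Rmax (nrm z) r1 - Rmax (nrm z') r1) <= nrm (psub z z')).
  { pose proof (nrm_lipschitz z z') as Hn; apply Rabs_le_between in Hn; apply Rabs_le_between.
    unfold Rmax; repeat destruct Rle_dec; lra. }
  pose proof (penalty_lipschitz t K T s s' ltac:(lra) Ht Hs Hs') as Hpen.
  assert (Lf * Rabs (Rmax (nrm z) r1 - Rmax (nrm z') r1) <= Lf * nrm (psub z z'))
    by (apply Rmult_le_compat_l; lra).
  set (n := nrm (psub z z')) in *; set (a := Rabs (s - s')) in *.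
  assert (0 <= n) by apply nrm_ge0; assert (0 <= a) by apply Rabs_pos.
  assert (0 <= Lf * a) by nra; assert (0 <= (/ 2 + lam) * n) by nra.
  assert (0 <= K * T * n) by (apply Rmult_le_pos; [apply Rmult_le_pos|]; lra).
  set (P := penalty t K s) in *; set (P' := penalty t K s') in *.
  replace (psi E (Rmax (nrm z) r1) + / 2 * s - / 2 * E + lam * s + P
           - (psi E (Rmax (nrm z') r1) + / 2 * s' - / 2 * E + lam * s' + P'))
    with ((psi E (Rmax (nrm z) r1) - psi E (Rmax (nrm z') r1)) + ((/ 2 + lam) * (s - s') + (P - P'))) by ring.
  eapply Rle_trans; [apply Rabs_triang|]; eapply Rle_trans; [apply Rplus_le_compat_l, Rabs_triang|].
  rewrite Rabs_mult, (Rabs_right (/ 2 + lam)) by lra; fold a; lra.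
Qed.

Lemma eps_barrier_superjet z0 s0 kap : r1 < nrm z0 -> 0 < kap ->
  superjet (eps_barrier E t lam K r1) z0 s0 (/ 2 + lam + 2 * K * ppart (s0 - t))
    (pscale (2 * dpsi_sq E (dot z0 z0)) z0) (psi_hessian E z0 kap).
Proof.
  intros Hz0 Hkap.
  destruct (psi_nrm_le_quadratic E z0 kap HE ltac:(lra) Hkap) as [d [Hd Hquad]].
  apply (superjet_of_quadratic_bound _ _ _ _ _ _ K (Rmin d (nrm z0 - r1)));
    [apply Rmin_glb_lt; lra | exact HK|].
  intros y s _ Hy _; pose proof (Rmin_l d (nrm z0 - r1)); pose proof (Rmin_r d (nrm z0 - r1)).
  assert (r1 <= nrm y)
    by (pose proof (nrm_le_add_psub z0 y) as Htri; rewrite nrm_psub_sym in Htri; lra).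
  unfold eps_barrier; rewrite !Rmax_left by lra.
  specialize (Hquad y ltac:(lra)); pose proof (penalty_le_expand t K s0 s ltac:(lra)); lra.
Qed.

(* [Geps] at the jet of the barrier is [- 1/2 - lam/2], whereas touching would force [<= - 1/2 - lam]. *)
Lemma eps_barrier_no_touch_above ue T z0 s0 : visc_sol (Geps E) u0 ue -> 0 < s0 < T -> r1 < nrm z0 ->
  (forall y s, 0
      <= s <= T -> ue y s - eps_barrier E t lam K r1 y s <= ue z0 s0 - eps_barrier E t lam K r1 z0 s0) ->
  False.
Proof.
  intros Hue Hs0 Hz0 Hmax.
  set (kap := lam / (2 * E)); assert (Hkap : 0 < kap) by (apply Rdiv_lt_0_compat; lra).
  pose proof (superjet_of_max_sub _ _ _ _ _ _ _ _ Hs0 Hmax (eps_barrier_superjet z0 s0 kap Hz0 Hkap)) as Hsup.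
  assert (Hp : pscale (2 * dpsi_sq E (dot z0 z0)) z0 <> (0, 0)).
  { intros Hp; apply (f_equal nrm) in Hp; rewrite nrm_pscale, nrm_zero in Hp.
    pose proof (dpsi_sq_neg E z0 ltac:(lra)); rewrite Rabs_left in Hp by lra; nra. }
  pose proof (eps_superjet_bound E ue z0 s0 _ _ _ HE Hue ltac:(lra) Hp Hsup) as Hbound.
  rewrite Geps_at_psi_jet in Hbound by lra.
  replace (E * kap) with (lam / 2) in Hbound by (unfold kap; field; lra).
  pose proof (Rmult_le_pos K (ppart (s0 - t)) ltac:(lra) (ppart_ge0 _)); lra.
Qed.

End EpsBarrier.

Lemma ue_le_psi ue E t lam : visc_sol (Geps E) u0 ue -> 0 < E -> E < t -> 0 < lam ->
  exists K, forall z s, E < nrm z -> 0 <= s <= t + 1 ->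
    ue z s <= psi E (nrm z) + / 2 * s - / 2 * E + lam * s + penalty t K s.
Proof.
  intros Hue HE Ht Hlam; pose proof Hue as [Huc [Hinit _]].
  set (T := t + 1); assert (HucT := Huc T ltac:(unfold T; lra)).
  destruct (visc_sol_near_initial (Geps E) ue T Hue ltac:(unfold T; lra)) as [C [HC0 Hup]].
  destruct (psi_large_near_E E HE (C + E)) as [r1 [Hr1 Hpsi1]].
  set (K := C + E + 1); assert (HK : 0 < K) by (unfold K; lra).
  exists K; intros zs ss Hzs Hss; apply Rnot_lt_le; intros Hpos.
  set (g z s := ue z s - eps_barrier E t lam K r1 z s).
  assert (Hnear : forall z s, 0 <= s <= T -> nrm z <= r1 -> g z s < 0).
  { intros z s Hs Hz; pose proof (eps_barrier_ge_near E t lam K r1 Hlam HK z s (proj1 Hs) Hz).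
    pose proof (proj2 (Hup z s Hs)); pose proof (nrm_ge0 z); unfold g; lra. }
  assert (Hfar : forall z s, 0 <= s <= T -> r1 <= nrm z ->
                 g z s <= - / 4 * nrm z + C + / 2 * E - penalty t K s).
  { intros z s Hs Hz; pose proof (eps_barrier_ge_far E t lam K r1 HE ltac:(lra) Hlam z s (proj1 Hs) Hz).
    pose proof (proj2 (Hup z s Hs)); unfold g; lra. }
  assert (HL : 0 < / 2 * (1 + / (r1 / E - 1)) + / 2 + lam + 2 * K * T).
  { assert (0 < / (r1 / E - 1)) by (apply Rinv_0_lt_compat;
      replace (r1 / E - 1) with ((r1 - E) / E) by (field; lra); apply Rdiv_lt_0_compat; lra).
    assert (0 <= K * T) by (apply Rmult_le_pos; unfold T; lra); lra. }
  destruct (strip_interior_max g T (4 * (C + E) + r1)) as [z0 [s0 [Hs0 [Hg0 Hmax]]]].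
  - unfold T; lra.
  - apply unif_cont_on_sub; [exact HucT|].
    eapply lipschitz_unif_cont_on; [exact HL | intros; apply eps_barrier_lipschitz; auto; lra].
  - exists zs, ss; split; [exact Hss|].
    pose proof (eps_barrier_le_psi E t lam K r1 HE zs ss Hzs); unfold g; lra.
  - intros z s Hs Hg; destruct (Rle_dec (nrm z) r1) as [Hz|Hz]; [pose proof (Hnear z s Hs Hz); lra|].
    pose proof (Hfar z s Hs ltac:(lra)); pose proof (penalty_ge0 t K s ltac:(lra)); lra.
  - intros z; destruct (Rle_dec (nrm z) r1) as [Hz|Hz];
    [pose proof (Hnear z 0 ltac:(unfold T; lra) Hz); lra|].
    pose proof (eps_barrier_initial E t lam K r1 HE ltac:(lra) z ltac:(lra) ltac:(lra)).
    unfold g; rewrite Hinit; lra.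
  - intros z; destruct (Rle_dec (nrm z) r1) as [Hz|Hz];
    [pose proof (Hnear z T ltac:(unfold T; lra) Hz); lra|].
    assert (penalty t K T = K) by apply penalty_horizon.
    pose proof (Hfar z T ltac:(unfold T; lra) ltac:(lra)); pose proof (nrm_ge0 z); unfold K in *; lra.
  - assert (Hz0 : r1 < nrm z0) by (apply Rnot_le_lt; intros Hz; pose proof (Hnear z0 s0 ltac:(lra) Hz); lra).
    apply (eps_barrier_no_touch_above E t lam K r1 HE ltac:(lra) Hlam HK ue T z0 s0 Hue Hs0 Hz0).
    intros y s Hs; apply Hmax, Hs.
Qed.

Theorem proposition1p5 :
  forall eps : R, eps > 0 ->
  forall ue u : pt -> R -> R,
    visc_sol (Geps eps) u0 ue ->
    visc_sol Geff u0 u ->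
    forall (x : pt) (t : R), 0 <= t -> nrm x = t -> t > eps * (1 + exp (-1)) ->
      Rabs (ue x t - u x t) >= / 2 * eps * (ln (t / eps - 1) + 1).
Proof.
  intros eps Heps ue u Hue Hu x t Ht0 Hx Ht.
  assert (Hte : eps < t) by (pose proof (exp_pos (-1)); nra).
  pose proof (u_nonneg_on_cone u x t Hu ltac:(lra) Hx) as Hu_cone.
  set (V := psi eps t + / 2 * t - / 2 * eps).
  assert (HV : V = - (/ 2 * eps * (ln (t / eps - 1) + 1))) by (unfold V, psi; ring).
  assert (Hue_cone : ue x t <= V).
  { apply Rnot_lt_le; intros Hlt.
    set (lam := (ue x t - V) / (2 * t)); assert (Hlam : 0 < lam) by (apply Rdiv_lt_0_compat; lra).
    destruct (ue_le_psi ue eps t lam Hue Heps Hte Hlam) as [K HK].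
    specialize (HK x t ltac:(lra) ltac:(lra)); rewrite penalty_before, Hx in HK by lra.
    assert (lam * t = (ue x t - V) / 2) by (unfold lam; field; lra).
    unfold V in *; lra. }
  rewrite Rabs_minus_sym; pose proof (Rle_abs (u x t - ue x t)); lra.
Qed.
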